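(* Let $g_2,g_3\in\mathbb{R}$ with $\Delta=g_2^3-27g_3^2>0$, and let $w$ (real, $w>0$) and $w'$ (purely imaginary, $\mathrm{Im}\,w'>0$) be the fundamental half-periods of the associated Weierstrass functions. Define \[ \widetilde{\Psi}_x(k)=\frac{\sigma(x+k+w')}{\sigma(x+w')\sigma(k)}e^{-\zeta(k)x-\zeta(w')k},\qquad \widetilde{\Psi}_x(k,l)=\frac{\sigma(x+k+l+w')}{\sigma(x+w')\sigma(k+l)}e^{-(\zeta(k)+\zeta(l))x-\zeta(w')(k+l)}. \] Then $\widetilde{\Psi}_x(k)$ and $\widetilde{\Psi}_x(k,l)$ are real-valued (wherever defined) when $x,k,l\in\mathbb{R}$.
   Context: $\sigma,\zeta,\wp$ are the Weierstrass sigma, zeta and elliptic functions with invariants $g_2,g_3$, i.e. $(\wp')^2=4\wp^3-g_2\wp-g_3$, $\zeta=\sigma'/\sigma$, $\wp=-\zeta'$, with period lattice generated by $2w,2w'$. *)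

From Stdlib Require Import Reals ZArith List.
From Coquelicot Require Import Coquelicot.
Import ListNotations.
Open Scope R_scope.

Definition cexp (z : C) : C :=
  (exp (Re z) * cos (Im z), exp (Re z) * sin (Im z)).

Definition Clim (u : nat -> C) : C :=
  (real (Lim_seq (fun N => Re (u N))), real (Lim_seq (fun N => Im (u N)))).

Definition lat (w w' : C) (m n : Z) : C :=
  Cplus (Cmult (RtoC (2 * IZR m)) w) (Cmult (RtoC (2 * IZR n)) w').

Definition sq_idx (N : nat) : list (Z * Z) :=
  flat_map (fun i => map (fun j => (Z.of_nat i - Z.of_nat N, Z.of_nat j - Z.of_nat N)%Z)
                         (seq 0 (2 * N + 1)))
           (seq 0 (2 * N + 1)).

Definition nonzero_idx (p : Z * Z) : bool :=
  negb (Z.eqb (fst p) 0 && Z.eqb (snd p) 0).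

Definition lat_sum (w w' : C) (N : nat) (f : C -> C) : C :=
  fold_right Cplus (RtoC 0)
    (map (fun p => f (lat w w' (fst p) (snd p))) (filter nonzero_idx (sq_idx N))).
Definition lat_prod (w w' : C) (N : nat) (f : C -> C) : C :=
  fold_right Cmult (RtoC 1)
    (map (fun p => f (lat w w' (fst p) (snd p))) (filter nonzero_idx (sq_idx N))).

Definition wsigma (w w' : C) (z : C) : C :=
  Cmult z (Clim (fun N => lat_prod w w' N (fun O =>
     Cmult (Cminus (RtoC 1) (Cdiv z O))
           (cexp (Cplus (Cdiv z O) (Cdiv (Cmult z z) (Cmult (RtoC 2) (Cmult O O)))))))).

(* Weierstrass zeta function (its series; zeta = sigma'/sigma) *)
Definition wzeta (w w' : C) (z : C) : C :=
  Cplus (Cinv z) (Clim (fun N => lat_sum w w' N (fun O =>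
     Cplus (Cplus (Cinv (Cminus z O)) (Cinv O)) (Cdiv z (Cmult O O))))).

Definition wg2 (w w' : C) : C :=
  Cmult (RtoC 60) (Clim (fun N => lat_sum w w' N (fun O => Cinv (Cmult (Cmult O O) (Cmult O O))))).
Definition wg3 (w w' : C) : C :=
  Cmult (RtoC 140) (Clim (fun N => lat_sum w w' N (fun O =>
     Cinv (Cmult (Cmult O O) (Cmult (Cmult O O) (Cmult O O)))))).

Definition Psi1 (w w' : C) (x k : C) : C :=
  Cmult (Cdiv (wsigma w w' (Cplus (Cplus x k) w'))
              (Cmult (wsigma w w' (Cplus x w')) (wsigma w w' k)))
        (cexp (Copp (Cplus (Cmult (wzeta w w' k) x) (Cmult (wzeta w w' w') k)))).

Definition Psi2 (w w' : C) (x k l : C) : C :=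
  Cmult (Cdiv (wsigma w w' (Cplus (Cplus (Cplus x k) l) w'))
              (Cmult (wsigma w w' (Cplus x w')) (wsigma w w' (Cplus k l))))
        (cexp (Copp (Cplus (Cmult (Cplus (wzeta w w' k) (wzeta w w' l)) x)
                           (Cmult (wzeta w w' w') (Cplus k l))))).

(* The lattice 2wZ + 2w'Z with w > 0 and w' = it, t > 0, is invariant under complex
   conjugation, so the truncated products and sums defining sigma and zeta commute with
   conjugation; in particular sigma and zeta are real on the real axis. Writing K for k
   (resp. k + l), Psi is therefore real as soon as
     Q = sigma(x + K + w') conj(sigma(x + w')) exp(- i Im(zeta w') K)
   is real, where conj(sigma(x + w')) = sigma(x - w').
   Truncate to the square |m|, |n| <= N. Comparing the Weierstrass factors at z + w' and at
   z - w' (the computation behind sigma(z + 2w') = - exp(2 eta'(z + w')) sigma(z)) gives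
   Q_N = conj(Q_N) V_N: along each column of the square the rational parts telescope and the
   phases add up, leaving a product V_N of 2N + 1 unimodular numbers, each within O(1/N^2)
   of 1. So V_N -> 1 and Im Q_N -> 0. Finally Q_N -> Q, because the Weierstrass factors are
   1 + O(|z/O|^3) and the N-th shell of the square has 8(N + 1) points, all of modulus at
   least 2 min(w, t) (N + 1). *)

From Stdlib Require Import Reals ZArith List Permutation Lia Bool Lra.
From Coquelicot Require Import Coquelicot.
Import ListNotations.
Open Scope R_scope.

Definition cprod (l : list C) : C := fold_right Cmult (RtoC 1) l.
Definition csum (l : list C) : C := fold_right Cplus (RtoC 0) l.
Definition rsum (l : list R) : R := fold_right Rplus 0 l.

Lemma cprod_app l1 l2 : cprod (l1 ++ l2) = (cprod l1 * cprod l2)%C.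
Proof. induction l1 as [|a l1 IH]; simpl; [ring|]. unfold cprod in *; simpl; rewrite IH; ring. Qed.

Lemma csum_app l1 l2 : csum (l1 ++ l2) = (csum l1 + csum l2)%C.
Proof. induction l1 as [|a l1 IH]; simpl; [ring|]. unfold csum in *; simpl; rewrite IH; ring. Qed.

Lemma rsum_app l1 l2 : rsum (l1 ++ l2) = rsum l1 + rsum l2.
Proof. induction l1 as [|a l1 IH]; simpl; [ring|]. unfold rsum in *; simpl; rewrite IH; ring. Qed.

Lemma Permutation_cprod l l' : Permutation l l' -> cprod l = cprod l'.
Proof. induction 1; unfold cprod in *; simpl; try congruence. ring. Qed.

Lemma Permutation_csum l l' : Permutation l l' -> csum l = csum l'.
Proof. induction 1; unfold csum in *; simpl; try congruence. ring. Qed.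

Lemma cprod_map_mult {A} (f g : A -> C) l :
  cprod (map (fun x => f x * g x)%C l) = (cprod (map f l) * cprod (map g l))%C.
Proof. induction l as [|a l IH]; unfold cprod in *; simpl; [ring|]. rewrite IH; ring. Qed.

Lemma csum_map_scal {A} c (f : A -> C) l :
  csum (map (fun x => c * f x)%C l) = (c * csum (map f l))%C.
Proof. induction l as [|a l IH]; unfold csum in *; simpl; [ring|]. rewrite IH; ring. Qed.

Lemma rsum_map_plus {A} (f g : A -> R) l :
  rsum (map (fun x => f x + g x) l) = rsum (map f l) + rsum (map g l).
Proof. induction l as [|a l IH]; unfold rsum in *; simpl; [ring|]. rewrite IH; ring. Qed.

Lemma rsum_map_scal {A} c (f : A -> R) l : rsum (map (fun x => c * f x) l) = c * rsum (map f l).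
Proof. induction l as [|a l IH]; unfold rsum in *; simpl; [ring|]. rewrite IH; ring. Qed.

Lemma rsum_map_le {A} (f : A -> R) l B :
  (forall x, In x l -> f x <= B) -> rsum (map f l) <= INR (length l) * B.
Proof.
  induction l as [|a l IH]; intros H; unfold rsum in *; cbn [map length fold_right]; [simpl; lra|].
  rewrite S_INR. specialize (IH (fun x Hx => H x (in_cons a x l Hx))).
  pose proof (H a (in_eq a l)). lra.
Qed.

Lemma rsum_map_nonneg {A} (f : A -> R) l : (forall x, 0 <= f x) -> 0 <= rsum (map f l).
Proof. intros H; induction l as [|a l IH]; unfold rsum in *; simpl; [lra|]. pose proof (H a); lra. Qed.

Lemma cprod_conj l : Cconj (cprod l) = cprod (map Cconj l).
Proof.
  induction l as [|a l IH]; unfold cprod in *; simpl.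
  - apply injective_projections; simpl; ring.
  - rewrite Cmult_conj, IH; reflexivity.
Qed.

Lemma csum_conj l : Cconj (csum l) = csum (map Cconj l).
Proof.
  induction l as [|a l IH]; unfold csum in *; simpl.
  - apply injective_projections; simpl; ring.
  - rewrite Cplus_conj, IH; reflexivity.
Qed.

Lemma Cmod_csum_le l : Cmod (csum l) <= rsum (map Cmod l).
Proof.
  induction l as [|a l IH]; unfold csum, rsum in *; simpl; [rewrite Cmod_0; lra|].
  eapply Rle_trans; [apply Cmod_triangle|lra].
Qed.

Lemma Cmod_cprod_unit l : (forall x, In x l -> Cmod x = 1) -> Cmod (cprod l) = 1.
Proof.
  induction l as [|a l IH]; unfold cprod in *; simpl; intros H; [apply Cmod_1|].
  rewrite Cmod_mult, IH, H by auto. ring.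
Qed.

Lemma cprod_telescope (c : nat -> C) L : (forall j, (j <= L)%nat -> c j <> RtoC 0) ->
  cprod (map (fun j => c j / c (S j))%C (seq 0 L)) = (c 0%nat / c L)%C.
Proof.
  induction L as [|L IH]; intros H.
  - unfold cprod; simpl. field. apply H; lia.
  - rewrite seq_S, map_app, cprod_app, IH by (intros; apply H; lia).
    unfold cprod; simpl. field. split; apply H; lia.
Qed.

Lemma cprod_flat_map {A B} (g : B -> C) (F : A -> list B) l :
  cprod (map g (flat_map F l)) = cprod (map (fun i => cprod (map g (F i))) l).
Proof. induction l as [|a l IH]; simpl; auto. rewrite map_app, cprod_app, IH. reflexivity. Qed.

Lemma Permutation_filter_negb {A} (f : A -> bool) l :
  Permutation l (filter f l ++ filter (fun x => negb (f x)) l).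
Proof.
  induction l as [|a l IH]; simpl; auto. destruct (f a); simpl.
  - constructor; auto.
  - apply Permutation_cons_app; auto.
Qed.

Lemma NoDup_flat_map {A B} (f : A -> list B) l :
  NoDup l -> (forall i, NoDup (f i)) ->
  (forall i j x, In x (f i) -> In x (f j) -> i = j) -> NoDup (flat_map f l).
Proof.
  intros Hl Hf Hd. induction Hl as [|i l Hi Hl IH]; simpl; [constructor|].
  apply NoDup_app; auto. intros b Hb Hb'. apply in_flat_map in Hb'.
  destruct Hb' as [j [Hj Hbj]]. assert (i = j) by (eapply Hd; eauto). subst; tauto.
Qed.

(** * The truncated lattice *)

Definition in_square (N : nat) (p : Z * Z) : Prop :=
  (- Z.of_nat N <= fst p <= Z.of_nat N)%Z /\ (- Z.of_nat N <= snd p <= Z.of_nat N)%Z.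

Definition in_squareb (N : nat) (p : Z * Z) : bool :=
  ((- Z.of_nat N <=? fst p) && (fst p <=? Z.of_nat N)
   && (- Z.of_nat N <=? snd p) && (snd p <=? Z.of_nat N))%Z.

Lemma in_squareP N p : in_squareb N p = true <-> in_square N p.
Proof. unfold in_squareb, in_square. rewrite !andb_true_iff, !Z.leb_le. tauto. Qed.

Lemma In_sq_idx N p : In p (sq_idx N) <-> in_square N p.
Proof.
  unfold sq_idx, in_square. rewrite in_flat_map. split.
  - intros [i [Hi Hp]]. apply in_map_iff in Hp. destruct Hp as [j [Hj Hj']].
    apply in_seq in Hi. apply in_seq in Hj'. subst p. simpl. lia.
  - destruct p as [m n]; simpl; intros [H1 H2].
    exists (Z.to_nat (m + Z.of_nat N)). split; [apply in_seq; lia|].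
    apply in_map_iff. exists (Z.to_nat (n + Z.of_nat N)). split; [f_equal; lia|apply in_seq; lia].
Qed.

Lemma NoDup_sq_idx N : NoDup (sq_idx N).
Proof.
  unfold sq_idx. apply NoDup_flat_map; [apply seq_NoDup| |].
  - intros i. apply FinFun.Injective_map_NoDup; [|apply seq_NoDup].
    intros a b E. injection E. lia.
  - intros i j x H1 H2. apply in_map_iff in H1, H2.
    destruct H1 as [a [<- _]], H2 as [b [E _]]. injection E. lia.
Qed.

Lemma length_sq_idx N : length (sq_idx N) = ((2 * N + 1) * (2 * N + 1))%nat.
Proof.
  unfold sq_idx. rewrite (flat_map_constant_length (c := (2 * N + 1)%nat)).
  - rewrite length_seq. lia.
  - intros. rewrite length_map, length_seq. reflexivity.
Qed.

Lemma cprod_sq_idx_rows N (g : Z * Z -> C) :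
  cprod (map g (sq_idx N)) =
  cprod (map (fun i => cprod (map (fun j => g (Z.of_nat i - Z.of_nat N, Z.of_nat j - Z.of_nat N)%Z)
     (seq 0 (2 * N + 1)))) (seq 0 (2 * N + 1))).
Proof.
  unfold sq_idx. rewrite cprod_flat_map. f_equal. apply map_ext. intros. rewrite map_map. reflexivity.
Qed.

Definition nz_idx N := filter nonzero_idx (sq_idx N).

Lemma nonzero_idxP p : nonzero_idx p = true <-> p <> (0%Z, 0%Z).
Proof.
  destruct p as [m n]; unfold nonzero_idx; simpl.
  rewrite negb_true_iff, andb_false_iff, !Z.eqb_neq. split.
  - intros [H|H] E; injection E; auto.
  - intros H. destruct (Z.eq_dec m 0); subst; [right|left]; congruence.
Qed.

Lemma In_nz_idx N p : In p (nz_idx N) <-> in_square N p /\ p <> (0%Z, 0%Z).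
Proof. unfold nz_idx. rewrite filter_In, In_sq_idx, nonzero_idxP. tauto. Qed.

Lemma NoDup_nz_idx N : NoDup (nz_idx N).
Proof. apply NoDup_filter, NoDup_sq_idx. Qed.

Lemma Permutation_zero_idx N :
  Permutation (filter (fun p => negb (nonzero_idx p)) (sq_idx N)) [(0%Z, 0%Z)].
Proof.
  apply NoDup_Permutation; [apply NoDup_filter, NoDup_sq_idx|repeat constructor; simpl; tauto|].
  intros p. rewrite filter_In, In_sq_idx, negb_true_iff.
  assert (nonzero_idx p = false <-> p = (0%Z, 0%Z)) as ->.
  { rewrite <- not_true_iff_false, nonzero_idxP. tauto. }
  simpl. split; [intros [_ ->]; auto|intros [<-|[]]; split; [unfold in_square; simpl; lia|auto]].
Qed.

Lemma length_nz_idx N : length (nz_idx N) = ((2 * N + 1) * (2 * N + 1) - 1)%nat.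
Proof.
  pose proof (Permutation_length (Permutation_filter_negb nonzero_idx (sq_idx N))) as H.
  rewrite length_app, (Permutation_length (Permutation_zero_idx N)), length_sq_idx in H.
  simpl in H. unfold nz_idx. lia.
Qed.

Lemma cprod_sq_idx N (g : Z * Z -> C) :
  cprod (map g (sq_idx N)) = (cprod (map g (nz_idx N)) * g (0%Z, 0%Z))%C.
Proof.
  rewrite (Permutation_cprod _ _ (Permutation_map g (Permutation_filter_negb nonzero_idx _))).
  rewrite map_app, cprod_app, (Permutation_cprod _ _ (Permutation_map g (Permutation_zero_idx N))).
  unfold cprod at 3; simpl. fold (nz_idx N). f_equal. ring.
Qed.

Lemma Permutation_nz_idx_invol N (s : Z * Z -> Z * Z) :
  (forall p, s (s p) = p) -> (forall p, in_square N p -> in_square N (s p)) ->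
  s (0%Z, 0%Z) = (0%Z, 0%Z) -> Permutation (nz_idx N) (map s (nz_idx N)).
Proof.
  intros Hs Hsq H0.
  assert (Hnz : forall p, p <> (0%Z, 0%Z) -> s p <> (0%Z, 0%Z)).
  { intros p Hp E. apply Hp. rewrite <- (Hs p), E. exact H0. }
  apply NoDup_Permutation; [apply NoDup_nz_idx| |].
  - apply FinFun.Injective_map_NoDup; [|apply NoDup_nz_idx].
    intros a b E. rewrite <- (Hs a), <- (Hs b), E. reflexivity.
  - intros p. rewrite in_map_iff, In_nz_idx. split.
    + intros [Hp Hp0]. exists (s p). rewrite Hs, In_nz_idx. auto.
    + intros [q [<- Hq]]. apply In_nz_idx in Hq. destruct Hq. auto.
Qed.

Definition shell N := filter (fun p => negb (in_squareb N p)) (nz_idx (S N)).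

Lemma Permutation_shell N : Permutation (nz_idx (S N)) (nz_idx N ++ shell N).
Proof.
  eapply perm_trans; [apply (Permutation_filter_negb (in_squareb N))|].
  apply Permutation_app_tail.
  apply NoDup_Permutation; [apply NoDup_filter, NoDup_nz_idx|apply NoDup_nz_idx|].
  intros [m n]. rewrite filter_In, !In_nz_idx, in_squareP. unfold in_square; simpl. intuition lia.
Qed.

Lemma length_shell N : length (shell N) = (8 * (N + 1))%nat.
Proof.
  pose proof (Permutation_length (Permutation_shell N)) as H.
  rewrite length_app, !length_nz_idx in H. lia.
Qed.

Lemma In_shell N m n : In (m, n) (shell N) ->
  (m, n) <> (0%Z, 0%Z) /\ (Z.of_nat (S N) <= Z.abs m \/ Z.of_nat (S N) <= Z.abs n)%Z.
Proof.
  unfold shell. rewrite filter_In, In_nz_idx, negb_true_iff. intros [[_ H0] H].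
  assert (~ in_square N (m, n)) by (rewrite <- in_squareP; congruence).
  unfold in_square in *; simpl in *. split; [auto|lia].
Qed.

Lemma Cconj_RtoC r : Cconj (RtoC r) = RtoC r.
Proof. apply injective_projections; simpl; ring. Qed.

Lemma Cconj_inv z : Cconj (/ z) = (/ Cconj z)%C.
Proof.
  destruct z as [a b]; apply injective_projections; unfold Cconj, Cinv; simpl;
  replace (a * (a * 1) + - b * (- b * 1)) with (a * (a * 1) + b * (b * 1)) by ring;
  unfold Rdiv; ring.
Qed.

Lemma Cconj_div a b : Cconj (a / b) = (Cconj a / Cconj b)%C.
Proof. unfold Cdiv. rewrite Cmult_conj, Cconj_inv. reflexivity. Qed.

Lemma Cinv_0 : (/ RtoC 0)%C = RtoC 0.
Proof. apply injective_projections; unfold Cinv; simpl; unfold Rdiv; ring. Qed.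

Lemma im_le_Cmod z : Rabs (Im z) <= Cmod z.
Proof.
  pose proof (Rmax_Cmod z) as H. destruct z as [a b]; simpl in *.
  pose proof (Rmax_r (Rabs a) (Rabs b)). lra.
Qed.

Lemma Cmod_le_abs_re_im z : Cmod z <= Rabs (Re z) + Rabs (Im z).
Proof.
  destruct z as [a b]; unfold Cmod; simpl. apply Rsqr_incr_0_var.
  - rewrite Rsqr_sqrt by nra. unfold Rsqr. split_Rabs; nra.
  - pose proof (Rabs_pos a); pose proof (Rabs_pos b); lra.
Qed.

Lemma neq_0_of_Im (z : C) : Im z <> 0 -> z <> RtoC 0.
Proof. intros H E. rewrite E in H. simpl in H. lra. Qed.

Lemma Im_0_of_conj z : Cconj z = z -> Im z = 0.
Proof. destruct z; unfold Cconj; simpl. intros H; injection H; lra. Qed.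

Lemma cexp_add a b : cexp (a + b)%C = (cexp a * cexp b)%C.
Proof.
  destruct a as [a1 a2], b as [b1 b2]; unfold cexp; apply injective_projections; simpl;
  rewrite exp_plus; try rewrite cos_plus; try rewrite sin_plus; ring.
Qed.

Lemma cexp_0 : cexp (RtoC 0) = RtoC 1.
Proof. unfold cexp; apply injective_projections; simpl; rewrite exp_0, ?cos_0, ?sin_0; ring. Qed.

Lemma cexp_csum l : cexp (csum l) = cprod (map cexp l).
Proof.
  induction l as [|a l IH]; simpl; [apply cexp_0|].
  unfold csum in *; simpl. rewrite cexp_add, IH. reflexivity.
Qed.

Lemma cexp_conj z : Cconj (cexp z) = cexp (Cconj z).
Proof.
  destruct z as [a b]; unfold cexp, Cconj; apply injective_projections; simpl;
  rewrite ?cos_neg, ?sin_neg; ring.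
Qed.

Lemma cexp_polar a b : cexp (a, b) = (RtoC (exp a) * cexp (0, b))%C.
Proof. unfold cexp; apply injective_projections; simpl; rewrite exp_0; ring. Qed.

Lemma Cmod_cexp z : Cmod (cexp z) = exp (Re z).
Proof.
  destruct z as [a b]; unfold cexp, Cmod; cbn [fst snd Re Im].
  replace ((exp a * cos b) ^ 2 + (exp a * sin b) ^ 2) with (exp a ^ 2).
  - apply sqrt_pow2. left; apply exp_pos.
  - pose proof (sin2_cos2 b) as H; unfold Rsqr in H.
    transitivity (exp a ^ 2 * (sin b * sin b + cos b * cos b)); [rewrite H|]; ring.
Qed.

Lemma Rabs_mult_le x y X Y : Rabs x <= X -> Rabs y <= Y -> Rabs (x * y) <= X * Y.
Proof. intros. rewrite Rabs_mult. apply Rmult_le_compat; auto; apply Rabs_pos. Qed.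

Lemma exp_le_3_of_le_1 z : z <= 1 -> exp z <= 3.
Proof.
  intros Hz. pose proof exp_le_3.
  destruct (Req_dec z 1) as [->|]; [auto|]. pose proof (exp_increasing z 1). lra.
Qed.

Lemma exp_le_mono x y : x <= y -> exp x <= exp y.
Proof. intros [H|H]; [left; apply exp_increasing; auto|rewrite H; lra]. Qed.

Lemma Derive_n_exp_scal a n s : Derive_n (fun s => exp (a * s)) n s = a ^ n * exp (a * s).
Proof.
  revert s; induction n as [|n IH]; intros s; simpl; [ring|].
  rewrite (Derive_ext _ (fun s => a ^ n * exp (a * s)) s IH).
  apply is_derive_unique. auto_derive; [auto|ring].
Qed.

Lemma exp_taylor_remainder a n : Rabs a <= 1 ->
  Rabs (exp a - sum_f_R0 (fun m => a ^ m / INR (fact m)) n) <= 3 * Rabs a ^ S n / INR (fact (S n)).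
Proof.
  intros Ha.
  destruct (Taylor_Lagrange (fun s => exp (a * s)) n 0 1 Rlt_0_1) as [z [Hz E]].
  { intros s _ [|k] _; simpl; [auto|].
    apply (ex_derive_ext (fun s => a ^ k * exp (a * s))).
    - intros; rewrite Derive_n_exp_scal; reflexivity.
    - auto_derive; auto. }
  assert (Hsum : sum_f_R0 (fun m => (1 - 0) ^ m / INR (fact m) * Derive_n (fun s => exp (a * s)) m 0) n
                 = sum_f_R0 (fun m => a ^ m / INR (fact m)) n).
  { apply sum_eq. intros m _. rewrite Derive_n_exp_scal, Rmult_0_r, exp_0, Rminus_0_r, pow1. lra. }
  rewrite Rmult_1_r, Hsum, Derive_n_exp_scal, Rminus_0_r, pow1 in E. rewrite E, Rplus_minus_l.
  assert (Hz3 : exp (a * z) <= 3).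
  { apply exp_le_3_of_le_1. pose proof (Rle_abs (a * z)) as H. rewrite Rabs_mult in H.
    rewrite (Rabs_pos_eq z) in H by lra. pose proof (Rabs_pos a). nra. }
  pose proof (exp_pos (a * z)). pose proof (INR_fact_lt_0 (S n)).
  unfold Rdiv. rewrite !Rabs_mult, <- RPow_abs, Rabs_inv.
  rewrite (Rabs_pos_eq (INR _)), (Rabs_pos_eq (exp _)) by lra.
  assert (0 <= Rabs a ^ S n * / INR (fact (S n))).
  { apply Rmult_le_pos; [apply pow_le, Rabs_pos|left; apply Rinv_0_lt_compat; lra]. }
  rewrite Rabs_R1. nra.
Qed.

Lemma exp_sub1_le a : Rabs a <= 1 -> Rabs (exp a - 1) <= 3 * Rabs a.
Proof.
  intros Ha. pose proof (exp_taylor_remainder a 0 Ha) as H.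
  replace (sum_f_R0 _ 0) with 1 in H by (simpl; field).
  replace (INR (fact 1)) with 1 in H by reflexivity. simpl in H. lra.
Qed.

Lemma exp_taylor1_le a : Rabs a <= 1 -> Rabs (exp a - 1 - a) <= 3 / 2 * a ^ 2.
Proof.
  intros Ha. pose proof (exp_taylor_remainder a 1 Ha) as H.
  replace (sum_f_R0 _ 1) with (1 + a) in H by (simpl; field).
  replace (INR (fact 2)) with 2 in H by (simpl; ring).
  rewrite <- (pow2_abs a). replace (exp a - (1 + a)) with (exp a - 1 - a) in H by ring. lra.
Qed.

Lemma exp_taylor2_le a : Rabs a <= 1 -> Rabs (exp a - 1 - a - a ^ 2 / 2) <= Rabs a ^ 3 / 2.
Proof.
  intros Ha. pose proof (exp_taylor_remainder a 2 Ha) as H.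
  replace (sum_f_R0 _ 2) with (1 + a + a ^ 2 / 2) in H by (simpl; field).
  replace (INR (fact 3)) with 6 in H by (simpl; ring).
  replace (exp a - (1 + a + a ^ 2 / 2)) with (exp a - 1 - a - a ^ 2 / 2) in H by ring. lra.
Qed.

Lemma cos_taylor_le b : Rabs b <= 2 -> 0 <= cos b - 1 + b ^ 2 / 2 <= b ^ 4 / 24.
Proof.
  intros Hb. destruct (pre_cos_bound b 0) as [L U]; [split_Rabs; lra|split_Rabs; lra|].
  cbn [Nat.mul Nat.add] in L, U.
  replace (cos_approx b 1) with (1 - b ^ 2 / 2) in L by (unfold cos_approx, cos_term; simpl; field).
  replace (cos_approx b 2) with (1 - b ^ 2 / 2 + b ^ 4 / 24) in U
    by (unfold cos_approx, cos_term; simpl; field).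
  lra.
Qed.

Lemma sin_taylor_le b : Rabs b <= 1 -> Rabs (sin b - b) <= Rabs b ^ 3 / 6.
Proof.
  assert (Hpos : forall c, 0 <= c <= 1 -> Rabs (sin c - c) <= c ^ 3 / 6).
  { intros c Hc. destruct (pre_sin_bound c 0) as [L U]; [lra|lra|].
    cbn [Nat.mul Nat.add] in L, U.
    replace (sin_approx c 1) with (c - c ^ 3 / 6) in L by (unfold sin_approx, sin_term; simpl; field).
    replace (sin_approx c 2) with (c - c ^ 3 / 6 + c ^ 5 / 120) in U
      by (unfold sin_approx, sin_term; simpl; field).
    assert (0 <= c ^ 3) by (apply pow_le; lra).
    assert (c * c <= 1) by nra.
    assert (c ^ 5 <= c ^ 3) by (replace (c ^ 5) with (c ^ 3 * (c * c)) by ring; nra).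
    split_Rabs; lra. }
  intros Hb. destruct (Rle_dec 0 b) as [Hb0|Hb0].
  - rewrite (Rabs_pos_eq b) by lra. apply Hpos. split_Rabs; lra.
  - rewrite (Rabs_left b) by lra.
    replace (sin b - b) with (- (sin (- b) - - b)) by (rewrite sin_neg; ring).
    rewrite Rabs_Ropp. apply Hpos. split_Rabs; lra.
Qed.

Section CexpTaylor.

Variables a b r : R.
Hypotheses (Ha : Rabs a <= r) (Hb : Rabs b <= r) (Hr : r <= 1).

Lemma cexp_taylor2_re_le :
  Rabs ((exp a - 1 - a - a ^ 2 / 2) + exp a * (cos b - 1 + b ^ 2 / 2) + (exp a - 1) * (- (b ^ 2 / 2)))
  <= 3 * r ^ 3.
Proof.
  pose proof (Rabs_pos a). pose proof (Rabs_pos b).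
  pose proof (exp_taylor2_le a ltac:(lra)) as E2. pose proof (exp_sub1_le a ltac:(lra)) as E0.
  pose proof (exp_le_3_of_le_1 a ltac:(split_Rabs; lra)). pose proof (exp_pos a).
  pose proof (cos_taylor_le b ltac:(lra)) as Cb.
  assert (Ha3 : Rabs a ^ 3 <= r ^ 3) by (apply pow_incr; lra).
  assert (Hb2 : b ^ 2 <= r ^ 2) by (rewrite <- (pow2_abs b); apply pow_incr; lra).
  assert (Hb4 : b ^ 4 <= r ^ 3).
  { replace (b ^ 4) with (b ^ 2 * b ^ 2) by ring. pose proof (pow2_ge_0 b).
    assert (r ^ 2 <= r) by (simpl; nra).
    replace (r ^ 3) with (r ^ 2 * r) by ring. apply Rmult_le_compat; lra. }
  assert (X1 : Rabs (exp a * (cos b - 1 + b ^ 2 / 2)) <= 3 * (r ^ 3 / 24))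
    by (apply Rabs_mult_le; rewrite Rabs_pos_eq; lra).
  assert (X2 : Rabs ((exp a - 1) * (- (b ^ 2 / 2))) <= (3 * r) * (r ^ 2 / 2)).
  { apply Rabs_mult_le; [lra|]. rewrite Rabs_Ropp, Rabs_pos_eq; [lra|]. pose proof (pow2_ge_0 b); lra. }
  eapply Rle_trans; [apply Rabs_triang|]. eapply Rle_trans; [apply Rplus_le_compat_r, Rabs_triang|].
  replace (3 * r * (r ^ 2 / 2)) with (3 / 2 * r ^ 3) in X2 by field. lra.
Qed.

Lemma cexp_taylor2_im_le : Rabs ((sin b - b) * (1 + a) + (exp a - 1 - a) * sin b) <= 7 * r ^ 3.
Proof.
  pose proof (Rabs_pos a). pose proof (Rabs_pos b).
  pose proof (exp_taylor1_le a ltac:(lra)) as E1. pose proof (sin_taylor_le b ltac:(lra)) as Sb.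
  assert (Hb3 : Rabs b ^ 3 <= r ^ 3) by (apply pow_incr; lra).
  assert (Ha2 : a ^ 2 <= r ^ 2) by (rewrite <- (pow2_abs a); apply pow_incr; lra).
  assert (Sb2 : Rabs (sin b) <= 2 * r).
  { replace (sin b) with ((sin b - b) + b) by ring. eapply Rle_trans; [apply Rabs_triang|].
    assert (Rabs b ^ 3 <= Rabs b) by (simpl; nra). lra. }
  assert (X1 : Rabs ((sin b - b) * (1 + a)) <= (r ^ 3 / 6) * 2)
    by (apply Rabs_mult_le; [lra|split_Rabs; lra]).
  assert (X2 : Rabs ((exp a - 1 - a) * sin b) <= (3 / 2 * r ^ 2) * (2 * r)) by (apply Rabs_mult_le; lra).
  replace (3 / 2 * r ^ 2 * (2 * r)) with (3 * r ^ 3) in X2 by field.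
  assert (0 <= r ^ 3) by (apply pow_le; lra).
  eapply Rle_trans; [apply Rabs_triang|]. lra.
Qed.

End CexpTaylor.

Lemma cexp_taylor2_le v : Cmod v <= 1 -> Cmod (cexp v - (1 + v + v * v / 2)) <= 10 * Cmod v ^ 3.
Proof.
  intros Hv. pose proof (re_le_Cmod v) as Ha. pose proof (im_le_Cmod v) as Hb.
  set (d := (cexp v - (1 + v + v * v / 2))%C).
  destruct v as [a b]; simpl in Ha, Hb.
  assert (Re_d : Re d = (exp a - 1 - a - a ^ 2 / 2) + exp a * (cos b - 1 + b ^ 2 / 2)
                        + (exp a - 1) * (- (b ^ 2 / 2))) by (unfold d, cexp, Cdiv, Cinv; simpl; field).
  assert (Im_d : Im d = (sin b - b) * (1 + a) + (exp a - 1 - a) * sin b)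
    by (unfold d, cexp, Cdiv, Cinv; simpl; field).
  pose proof (cexp_taylor2_re_le a b _ Ha Hb Hv). pose proof (cexp_taylor2_im_le a b _ Ha Hb Hv).
  pose proof (Cmod_le_abs_re_im d). rewrite Re_d, Im_d in *. lra.
Qed.

(** * Weierstrass factors and convergence of the truncations *)

Definition weierstrass_factor (z O : C) : C := ((1 - z / O) * cexp (z / O + z * z / (2 * (O * O))))%C.

Definition zeta_term (z O : C) : C := (/ (z - O) + / O + z / (O * O))%C.

Lemma weierstrass_factor_sub1_le u : Cmod u <= 1 / 2 ->
  Cmod ((1 - u) * cexp (u + u * u / 2) - 1)%C <= 32 * Cmod u ^ 3.
Proof.
  intros Hu. set (v := (u + u * u / 2)%C). set (d := (cexp v - (1 + v + v * v / 2))%C).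
  (* (1 - u)(1 + v + v^2/2) = 1 - u^3/2 - 3u^4/8 - u^5/8 *)
  assert (E : ((1 - u) * cexp v - 1)%C =
     (RtoC (- 1 / 2) * (u * (u * u)) + RtoC (- 3 / 8) * ((u * u) * (u * u))
      + RtoC (- 1 / 8) * (u * ((u * u) * (u * u))) + (1 - u) * d)%C).
  { unfold d, v. rewrite !RtoC_div by lra. field. }
  rewrite E. set (r := Cmod u) in *. pose proof (Cmod_ge_0 u) as Hr.
  assert (Hv : Cmod v <= 5 / 4 * r).
  { unfold v. eapply Rle_trans; [apply Cmod_triangle|].
    rewrite Cmod_div, Cmod_mult, Cmod_R, Rabs_pos_eq by (try lra; intro E2; injection E2; lra).
    fold r. pose proof (Rmult_le_compat_l r r (1 / 2) Hr Hu). lra. }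
  assert (Hd : Cmod d <= 10 * (5 / 4 * r) ^ 3).
  { eapply Rle_trans; [apply cexp_taylor2_le; lra|].
    apply Rmult_le_compat_l; [lra|]. apply pow_incr. split; [apply Cmod_ge_0|lra]. }
  assert (H1u : Cmod (1 - u)%C <= 3 / 2).
  { unfold Cminus. eapply Rle_trans; [apply Cmod_triangle|]. rewrite Cmod_opp, Cmod_1. fold r. lra. }
  assert (Hprod : Cmod (1 - u)%C * Cmod d <= 3 / 2 * (10 * (5 / 4 * r) ^ 3))
    by (apply Rmult_le_compat; try apply Cmod_ge_0; lra).
  eapply Rle_trans; [apply Cmod_triangle|].
  eapply Rle_trans; [apply Rplus_le_compat_r, Cmod_triangle|].
  eapply Rle_trans; [apply Rplus_le_compat_r, Rplus_le_compat_r, Cmod_triangle|].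
  rewrite !Cmod_mult, !Cmod_R. fold r.
  rewrite (Rabs_left (-1/2)), (Rabs_left (-3/8)), (Rabs_left (-1/8)) by lra.
  assert (r ^ 4 <= r ^ 3 / 2) by (replace (r ^ 4) with (r ^ 3 * r) by ring; pose proof (pow_le r 3 Hr); nra).
  assert (r ^ 5 <= r ^ 3 / 4) by (replace (r ^ 5) with (r ^ 3 * (r * r)) by ring; pose proof (pow_le r 3 Hr); nra).
  replace (r * (r * r * (r * r))) with (r ^ 5) by ring.
  replace (r * (r * r)) with (r ^ 3) by ring. replace (r * r * (r * r)) with (r ^ 4) by ring.
  replace ((5 / 4 * r) ^ 3) with (125 / 64 * r ^ 3) in Hprod by field.
  pose proof (pow_le r 3 Hr). lra.
Qed.

Lemma weierstrass_factor_sub1_le_cube z O : O <> RtoC 0 -> Cmod (z / O)%C <= 1 / 2 ->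
  Cmod (weierstrass_factor z O - 1)%C <= 32 * Cmod (z / O)%C ^ 3.
Proof.
  intros HO Hu. unfold weierstrass_factor.
  replace (z / O + z * z / (2 * (O * O)))%C with (z / O + (z / O) * (z / O) / 2)%C by (field; auto).
  apply weierstrass_factor_sub1_le; auto.
Qed.

Lemma zeta_term_le z O : O <> RtoC 0 -> 2 * Cmod z <= Cmod O ->
  Cmod (zeta_term z O) <= 2 * Cmod z ^ 2 / Cmod O ^ 3.
Proof.
  intros HO Hz. pose proof (Cmod_gt_0 O) as [HO0 _]. specialize (HO0 HO).
  assert (Hzo : Cmod O / 2 <= Cmod (z - O)%C).
  { pose proof (Cmod_triangle (O - z)%C z) as H. replace (O - z + z)%C with O in H by ring.
    rewrite <- (Cmod_opp (O - z)) in H. replace (- (O - z))%C with (z - O)%C in H by ring. lra. }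
  assert (Hzo0 : (z - O)%C <> RtoC 0) by (intro E; rewrite E, Cmod_0 in Hzo; lra).
  assert (E : zeta_term z O = (z * z / (O * O * (z - O)))%C) by (unfold zeta_term; field; auto).
  rewrite E, Cmod_div, !Cmod_mult by (repeat apply Cmult_neq_0; auto).
  apply Rle_trans with (Cmod z * Cmod z / (Cmod O * Cmod O * (Cmod O / 2))).
  - apply Rmult_le_compat_l; [pose proof (Cmod_ge_0 z); nra|].
    apply Rinv_le_contravar; [repeat apply Rmult_lt_0_compat; lra|].
    apply Rmult_le_compat_l; [nra|lra].
  - right. field. lra.
Qed.

Definition is_Clim_seq (u : nat -> C) (L : C) :=
  is_lim_seq (fun n => Re (u n)) (Re L) /\ is_lim_seq (fun n => Im (u n)) (Im L).

Lemma Im_Clim_real u : (forall n, Im (u n) = 0) -> Im (Clim u) = 0.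
Proof.
  intros H. unfold Clim; simpl. rewrite (Lim_seq_ext _ (fun _ => 0)) by auto.
  rewrite Lim_seq_const. reflexivity.
Qed.

Lemma is_Clim_seq_const a : is_Clim_seq (fun _ => a) a.
Proof. split; apply is_lim_seq_const. Qed.

Lemma is_Clim_seq_plus u v L M :
  is_Clim_seq u L -> is_Clim_seq v M -> is_Clim_seq (fun n => u n + v n)%C (L + M)%C.
Proof. intros [H1 H2] [H3 H4]. split; simpl; apply is_lim_seq_plus'; auto. Qed.

Lemma is_Clim_seq_mult u v L M :
  is_Clim_seq u L -> is_Clim_seq v M -> is_Clim_seq (fun n => u n * v n)%C (L * M)%C.
Proof.
  intros [H1 H2] [H3 H4]. split; simpl.
  - apply is_lim_seq_minus'; apply is_lim_seq_mult'; auto.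
  - apply is_lim_seq_plus'; apply is_lim_seq_mult'; auto.
Qed.

Lemma is_Clim_seq_conj u L : is_Clim_seq u L -> is_Clim_seq (fun n => Cconj (u n)) (Cconj L).
Proof. intros [H1 H2]. split; simpl; [auto|apply (is_lim_seq_opp _ (Im L)) in H2; exact H2]. Qed.

Lemma is_Clim_seq_cexp u L : is_Clim_seq u L -> is_Clim_seq (fun n => cexp (u n)) (cexp L).
Proof.
  intros [H1 H2]. unfold cexp; split; simpl; apply is_lim_seq_mult';
    apply is_lim_seq_continuous; auto;
    solve [apply derivable_continuous_pt, derivable_pt_exp|apply continuity_cos|apply continuity_sin].
Qed.

Lemma Cmod_sub_telescope (u : nat -> C) (a : nat -> R) N0 :
  (forall N, (N0 <= N)%nat -> Cmod (u (S N) - u N)%C <= a N - a (S N)) ->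
  forall n m, (N0 <= n <= m)%nat -> Cmod (u m - u n)%C <= a n - a m.
Proof.
  intros H n m [Hn Hm]. induction Hm as [|m Hm IH].
  - replace (u n - u n)%C with (RtoC 0) by ring. rewrite Cmod_0. lra.
  - replace (u (S m) - u n)%C with ((u (S m) - u m) + (u m - u n))%C by ring.
    eapply Rle_trans; [apply Cmod_triangle|]. specialize (H m ltac:(lia)). lra.
Qed.

Lemma is_Clim_seq_of_Cauchy (u : nat -> C) :
  (forall eps : posreal, exists M, forall n m, (M <= n)%nat -> (M <= m)%nat -> Cmod (u n - u m)%C < eps) ->
  is_Clim_seq u (Clim u).
Proof.
  intros H.
  assert (Hcomp : forall f : C -> R, (forall z, Rabs (f z) <= Cmod z) ->
            (forall a b, f (a - b)%C = f a - f b) -> ex_finite_lim_seq (fun n => f (u n))).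
  { intros f Hf Hl. apply ex_lim_seq_cauchy_corr. intros eps.
    destruct (H eps) as [M HM]. exists M. intros n m Hn Hm.
    rewrite <- Hl. eapply Rle_lt_trans; [apply Hf|auto]. }
  destruct (Hcomp Re re_le_Cmod (fun _ _ => eq_refl)) as [lr Hr].
  destruct (Hcomp Im im_le_Cmod (fun _ _ => eq_refl)) as [li Hi].
  unfold Clim, is_Clim_seq. simpl. rewrite (is_lim_seq_unique _ _ Hr), (is_lim_seq_unique _ _ Hi).
  split; auto.
Qed.

Lemma inv_sq_le_inv_sub N : (1 <= N)%nat -> / (INR N + 1) ^ 2 <= / INR N - / (INR N + 1).
Proof.
  intros H. apply le_INR in H. simpl in H.
  replace (/ INR N - / (INR N + 1)) with (/ (INR N * (INR N + 1))) by (field; lra).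
  apply Rinv_le_contravar; simpl; nra.
Qed.

Lemma is_Clim_seq_of_increments (u : nat -> C) N0 B : (1 <= N0)%nat -> 0 <= B ->
  (forall N, (N0 <= N)%nat -> Cmod (u (S N) - u N)%C <= B / (INR N + 1) ^ 2) ->
  is_Clim_seq u (Clim u).
Proof.
  intros HN0 HB H. apply is_Clim_seq_of_Cauchy.
  assert (Htel : forall n m, (N0 <= n <= m)%nat -> Cmod (u m - u n)%C <= B / INR n - B / INR m).
  { apply Cmod_sub_telescope. intros N HN. eapply Rle_trans; [apply H; auto|].
    rewrite S_INR. unfold Rdiv. rewrite <- Rmult_minus_distr_l.
    apply Rmult_le_compat_l; [auto|apply inv_sq_le_inv_sub; lia]. }
  assert (Hsmall : forall n m, (N0 <= n <= m)%nat -> Cmod (u m - u n)%C <= B / INR n).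
  { intros n m Hnm. specialize (Htel n m Hnm).
    assert (0 <= B / INR m) by (apply Rdiv_le_0_compat; [auto|apply lt_0_INR; lia]). lra. }
  intros eps. destruct (archimed_cor1 (eps / (B + 1))) as [M [HM1 HM2]].
  { apply Rdiv_lt_0_compat; [apply cond_pos|lra]. }
  exists (Nat.max M N0). intros n m Hn Hm.
  assert (Hk : forall k, (Nat.max M N0 <= k)%nat -> B / INR k < eps).
  { intros k Hk. assert (HMk : INR M <= INR k) by (apply le_INR; lia).
    assert (0 < INR M) by (apply lt_0_INR; lia). pose proof (cond_pos eps).
    apply Rle_lt_trans with ((B + 1) / INR M).
    - unfold Rdiv. apply Rmult_le_compat; try lra; [left; apply Rinv_0_lt_compat; lra|].
      apply Rinv_le_contravar; lra.
    - apply (Rmult_lt_compat_l (B + 1)) in HM1; [|lra].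
      replace ((B + 1) * (eps / (B + 1))) with (pos eps) in HM1 by (field; lra). exact HM1. }
  destruct (le_lt_dec n m) as [Hnm|Hnm].
  - rewrite <- Cmod_opp. replace (- (u n - u m))%C with (u m - u n)%C by ring.
    eapply Rle_lt_trans; [apply Hsmall; lia|apply Hk; lia].
  - eapply Rle_lt_trans; [apply Hsmall; lia|apply Hk; lia].
Qed.

Lemma Cmod_le_of_rel_increments (u : nat -> C) N0 A : (1 <= N0)%nat -> 0 <= A ->
  (forall N, (N0 <= N)%nat -> Cmod (u (S N) - u N)%C <= Cmod (u N) * (A / (INR N + 1) ^ 2)) ->
  forall N, (N0 <= N)%nat -> Cmod (u N) <= Cmod (u N0) * exp (A / INR N0 - A / INR N).
Proof.
  intros HN0 HA H N HN. induction HN as [|N HN IH].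
  - rewrite Rminus_diag, exp_0. lra.
  - set (d := A / (INR N + 1) ^ 2).
    assert (Hstep : Cmod (u (S N)) <= Cmod (u N) * (1 + d)).
    { replace (u (S N)) with ((u (S N) - u N) + u N)%C by ring.
      eapply Rle_trans; [apply Cmod_triangle|]. specialize (H N HN). fold d in H. lra. }
    assert (Hd : 1 + d <= exp (A / INR N - A / INR (S N))).
    { eapply Rle_trans; [apply exp_ineq1_le|]. apply exp_le_mono.
      unfold d, Rdiv. rewrite S_INR, <- Rmult_minus_distr_l.
      apply Rmult_le_compat_l; [auto|apply inv_sq_le_inv_sub; lia]. }
    pose proof (Cmod_ge_0 (u N)). pose proof (Cmod_ge_0 (u N0)).
    eapply Rle_trans; [apply Hstep|].
    eapply Rle_trans; [apply Rmult_le_compat; [auto| |apply IH|apply Hd]|].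
    + unfold d. pose proof (pow2_ge_0 (INR N + 1)).
      assert (0 <= A / (INR N + 1) ^ 2) by (apply Rdiv_le_0_compat; [auto|pose proof (pos_INR N); nra]).
      lra.
    + rewrite Rmult_assoc, <- exp_plus. right. f_equal. f_equal. ring.
Qed.

Lemma is_Clim_seq_of_rel_increments (u : nat -> C) N0 A : (1 <= N0)%nat -> 0 <= A ->
  (forall N, (N0 <= N)%nat -> Cmod (u (S N) - u N)%C <= Cmod (u N) * (A / (INR N + 1) ^ 2)) ->
  is_Clim_seq u (Clim u).
Proof.
  intros HN0 HA H. pose proof (Cmod_ge_0 (u N0)) as Hu0. pose proof (exp_pos A).
  apply (is_Clim_seq_of_increments u N0 (Cmod (u N0) * exp A * A)); auto.
  { apply Rmult_le_pos; [apply Rmult_le_pos|]; lra. }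
  intros N HN. eapply Rle_trans; [apply H; auto|].
  assert (Hexp : exp (A / INR N0 - A / INR N) <= exp A).
  { apply exp_le_mono. assert (1 <= INR N0) by (apply (le_INR 1); auto).
    assert (0 <= A / INR N) by (apply Rdiv_le_0_compat; [auto|apply lt_0_INR; lia]).
    assert (A / INR N0 <= A) by (unfold Rdiv; rewrite <- (Rmult_1_r A) at 2;
      apply Rmult_le_compat_l; [auto|rewrite <- Rinv_1; apply Rinv_le_contravar; lra]).
    lra. }
  pose proof (Cmod_le_of_rel_increments u N0 A HN0 HA H N HN) as Hbound.
  assert (0 <= A / (INR N + 1) ^ 2) by (apply Rdiv_le_0_compat; [auto|pose proof (pos_INR N); nra]).
  unfold Rdiv in *. rewrite <- Rmult_assoc.
  apply Rmult_le_compat_r; [left; apply Rinv_0_lt_compat; pose proof (pos_INR N); nra|].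
  apply Rmult_le_compat_r; [auto|]. nra.
Qed.

Lemma Cmod_cprod_sub1_le (l : list C) :
  Cmod (cprod l - 1)%C <= exp (rsum (map (fun a => Cmod (a - 1)%C) l)) - 1.
Proof.
  induction l as [|a l IH]; unfold cprod, rsum in *; simpl.
  - replace (RtoC 1 - RtoC 1)%C with (RtoC 0) by ring. rewrite Cmod_0, exp_0. lra.
  - set (P := fold_right Cmult (RtoC 1) l) in *.
    set (S := fold_right Rplus 0 (map (fun a => Cmod (a - 1)%C) l)) in *.
    replace (a * P - 1)%C with ((a - 1) * P + (P - 1))%C by ring.
    eapply Rle_trans; [apply Cmod_triangle|]. rewrite Cmod_mult.
    assert (HP : Cmod P <= exp S).
    { replace P with ((P - 1) + 1)%C by ring. eapply Rle_trans; [apply Cmod_triangle|].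
      rewrite Cmod_1. lra. }
    set (x := Cmod (a - 1)%C). pose proof (Cmod_ge_0 (a - 1)%C).
    rewrite exp_plus. pose proof (exp_ineq1_le x). pose proof (exp_pos S).
    assert (x * Cmod P <= x * exp S) by (apply Rmult_le_compat_l; auto). nra.
Qed.

Lemma exp_sub1_le_mul_exp x : exp x - 1 <= x * exp x.
Proof.
  pose proof (exp_ineq1_le (- x)) as H. rewrite exp_Ropp in H. pose proof (exp_pos x).
  apply (Rmult_le_compat_r (exp x)) in H; [|lra].
  rewrite Rmult_plus_distr_r, Rinv_l in H by lra. lra.
Qed.

Lemma lat_RtoC_imag w t m n : lat (RtoC w) (0, t) m n = (2 * IZR m * w, 2 * IZR n * t).
Proof. unfold lat; apply injective_projections; simpl; ring. Qed.

Lemma exists_nat_ge (x : R) : exists N : nat, x <= INR N.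
Proof.
  destruct (archimed x) as [H1 H2]. exists (Z.to_nat (up x)).
  destruct (Z_le_gt_dec 0 (up x)).
  - rewrite INR_IZR_INZ, Z2Nat.id by auto. lra.
  - pose proof (pos_INR (Z.to_nat (up x))). assert (IZR (up x) < 0) by (apply IZR_lt; lia). lra.
Qed.

Section Lattice.

Variables w t : R.
Hypotheses (Hw : 0 < w) (Ht : 0 < t).

Let W := RtoC w.
Let w' : C := (0, t).
Let c := Rmin w t.

Lemma lat_min_pos : 0 < c.
Proof. unfold c, Rmin; destruct Rle_dec; lra. Qed.

Lemma lat_neq_0 m n : (m, n) <> (0%Z, 0%Z) -> lat W w' m n <> RtoC 0.
Proof.
  intros H E. unfold W, w' in E. rewrite lat_RtoC_imag in E. injection E as E1 E2.
  apply H. assert (IZR m = 0) by nra. assert (IZR n = 0) by nra.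
  apply eq_IZR in H0. apply eq_IZR in H1. subst; auto.
Qed.

Lemma Cmod_lat_shell_ge N m n : In (m, n) (shell N) -> 2 * c * (INR N + 1) <= Cmod (lat W w' m n).
Proof.
  intros H. apply In_shell in H as [_ H]. unfold W, w'. rewrite lat_RtoC_imag.
  assert (c <= w /\ c <= t) as [Hcw Hct] by (unfold c, Rmin; destruct Rle_dec; lra).
  pose proof lat_min_pos.
  replace (INR N + 1) with (IZR (Z.of_nat (S N))) by (rewrite <- INR_IZR_INZ, S_INR; auto).
  destruct H as [H|H]; apply IZR_le in H; rewrite abs_IZR in H.
  - pose proof (re_le_Cmod (2 * IZR m * w, 2 * IZR n * t)) as Hre. simpl in Hre.
    rewrite !Rabs_mult, (Rabs_pos_eq 2), (Rabs_pos_eq w) in Hre by lra.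
    assert (IZR (Z.of_nat (S N)) * c <= Rabs (IZR m) * w)
      by (apply Rmult_le_compat; try lra; apply IZR_le; lia).
    lra.
  - pose proof (im_le_Cmod (2 * IZR m * w, 2 * IZR n * t)) as Him. simpl in Him.
    rewrite !Rabs_mult, (Rabs_pos_eq 2), (Rabs_pos_eq t) in Him by lra.
    assert (IZR (Z.of_nat (S N)) * c <= Rabs (IZR n) * t)
      by (apply Rmult_le_compat; try lra; apply IZR_le; lia).
    lra.
Qed.

Lemma lat_prod_S N f : lat_prod W w' (S N) f =
  (lat_prod W w' N f * cprod (map (fun p => f (lat W w' (fst p) (snd p))) (shell N)))%C.
Proof.
  unfold lat_prod. fold (nz_idx (S N)) (nz_idx N). change (fold_right Cmult (RtoC 1) ?l) with (cprod l).
  rewrite (Permutation_cprod _ _ (Permutation_map _ (Permutation_shell N))), map_app, cprod_app.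
  reflexivity.
Qed.

Lemma lat_sum_S N f : lat_sum W w' (S N) f =
  (lat_sum W w' N f + csum (map (fun p => f (lat W w' (fst p) (snd p))) (shell N)))%C.
Proof.
  unfold lat_sum. fold (nz_idx (S N)) (nz_idx N). change (fold_right Cplus (RtoC 0) ?l) with (csum l).
  rewrite (Permutation_csum _ _ (Permutation_map _ (Permutation_shell N))), map_app, csum_app.
  reflexivity.
Qed.

Lemma rsum_shell_cube_le (f : C -> R) M N : 0 <= M ->
  (forall O, O <> RtoC 0 -> 2 * c * (INR N + 1) <= Cmod O -> f O <= M / Cmod O ^ 3) ->
  rsum (map (fun p => f (lat W w' (fst p) (snd p))) (shell N)) <= M / (c ^ 3 * (INR N + 1) ^ 2).
Proof.
  intros HM Hf. pose proof lat_min_pos. pose proof (pos_INR N).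
  assert (Hr : 0 < 2 * c * (INR N + 1)) by (apply Rmult_lt_0_compat; lra).
  eapply Rle_trans; [apply (rsum_map_le _ _ (M / (2 * c * (INR N + 1)) ^ 3))|].
  - intros [m n] Hin. cbn [fst snd]. pose proof (Cmod_lat_shell_ge N m n Hin) as HO.
    eapply Rle_trans; [apply Hf; [apply lat_neq_0, (In_shell N m n Hin)|auto]|].
    unfold Rdiv. apply Rmult_le_compat_l; [auto|].
    apply Rinv_le_contravar; [apply pow_lt; lra|apply pow_incr; lra].
  - rewrite length_shell, mult_INR, plus_INR. right. simpl. field. lra.
Qed.

Lemma eventually_Cmod_le (z : C) :
  exists N0, (1 <= N0)%nat /\ forall N, (N0 <= N)%nat -> Cmod z <= c * (INR N + 1).
Proof.
  destruct (exists_nat_ge (Cmod z / c)) as [M HM]. exists (S M). split; [lia|].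
  intros N HN. apply le_INR in HN. rewrite S_INR in HN. pose proof lat_min_pos.
  apply (Rmult_le_compat_r c) in HM; [|lra]. unfold Rdiv in HM.
  rewrite Rmult_assoc, Rinv_l, Rmult_1_r in HM by lra. nra.
Qed.

Lemma is_Clim_seq_lat_prod_weierstrass (z : C) :
  is_Clim_seq (fun N => lat_prod W w' N (weierstrass_factor z))
              (Clim (fun N => lat_prod W w' N (weierstrass_factor z))).
Proof.
  destruct (eventually_Cmod_le z) as [N0 [HN0 Hz]]. pose proof lat_min_pos. pose proof (Cmod_ge_0 z).
  set (A := 32 * Cmod z ^ 3 / c ^ 3).
  assert (HA : 0 <= A) by (apply Rdiv_le_0_compat; [pose proof (pow_le _ 3 H0); lra|apply pow_lt; lra]).
  apply (is_Clim_seq_of_rel_increments _ N0 (A * exp A)); auto.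
  { pose proof (exp_pos A). nra. }
  intros N HN. specialize (Hz N HN). pose proof (pos_INR N). rewrite lat_prod_S.
  set (P := lat_prod W w' N _). set (Q := cprod _).
  replace (P * Q - P)%C with (P * (Q - 1))%C by ring. rewrite Cmod_mult.
  apply Rmult_le_compat_l; [apply Cmod_ge_0|].
  eapply Rle_trans; [apply Cmod_cprod_sub1_le|]. rewrite map_map.
  set (x := rsum _).
  assert (Hx : x <= A / (INR N + 1) ^ 2).
  { unfold x, A. replace (32 * Cmod z ^ 3 / c ^ 3 / (INR N + 1) ^ 2)
      with (32 * Cmod z ^ 3 / (c ^ 3 * (INR N + 1) ^ 2)) by (field; lra).
    apply (rsum_shell_cube_le (fun O => Cmod (weierstrass_factor z O - 1)%C));
      [pose proof (pow_le _ 3 H0); lra|].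
    intros O HO HOge. assert (0 < Cmod O) by (apply Cmod_gt_0; auto).
    assert (Hu : Cmod (z / O)%C <= 1 / 2).
    { rewrite Cmod_div by auto. apply (Rmult_le_reg_r (Cmod O)); [lra|].
      unfold Rdiv. rewrite Rmult_assoc, Rinv_l by lra. lra. }
    eapply Rle_trans; [apply weierstrass_factor_sub1_le_cube; auto|].
    rewrite Cmod_div by auto. right. field. lra. }
  assert (Hx0 : 0 <= x) by (apply rsum_map_nonneg; intros; apply Cmod_ge_0).
  assert (HxA : x <= A).
  { eapply Rle_trans; [apply Hx|]. unfold Rdiv. rewrite <- (Rmult_1_r A) at 2.
    apply Rmult_le_compat_l; [auto|]. rewrite <- Rinv_1. apply Rinv_le_contravar; [lra|]. nra. }
  eapply Rle_trans; [apply exp_sub1_le_mul_exp|].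
  replace (A * exp A / (INR N + 1) ^ 2) with (A / (INR N + 1) ^ 2 * exp A) by (field; lra).
  apply Rmult_le_compat; [auto|left; apply exp_pos|auto|apply exp_le_mono; auto].
Qed.

Lemma is_Clim_seq_lat_sum_zeta (z : C) :
  is_Clim_seq (fun N => lat_sum W w' N (zeta_term z)) (Clim (fun N => lat_sum W w' N (zeta_term z))).
Proof.
  destruct (eventually_Cmod_le z) as [N0 [HN0 Hz]]. pose proof lat_min_pos. pose proof (Cmod_ge_0 z).
  assert (HM : 0 <= 2 * Cmod z ^ 2) by (pose proof (pow2_ge_0 (Cmod z)); lra).
  apply (is_Clim_seq_of_increments _ N0 (2 * Cmod z ^ 2 / c ^ 3)); auto.
  { apply Rdiv_le_0_compat; [auto|apply pow_lt; lra]. }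
  intros N HN. specialize (Hz N HN). pose proof (pos_INR N). rewrite lat_sum_S.
  replace (lat_sum W w' N (zeta_term z) + csum _ - lat_sum W w' N (zeta_term z))%C
    with (csum (map (fun p => zeta_term z (lat W w' (fst p) (snd p))) (shell N))) by ring.
  eapply Rle_trans; [apply Cmod_csum_le|]. rewrite map_map.
  replace (2 * Cmod z ^ 2 / c ^ 3 / (INR N + 1) ^ 2)
    with (2 * Cmod z ^ 2 / (c ^ 3 * (INR N + 1) ^ 2)) by (field; lra).
  apply (rsum_shell_cube_le (fun O => Cmod (zeta_term z O))); auto.
  intros O HO HOge. apply zeta_term_le; auto. lra.
Qed.

End Lattice.

(** * Conjugation symmetry *)

Lemma weierstrass_factor_conj z O :
  Cconj (weierstrass_factor z O) = weierstrass_factor (Cconj z) (Cconj O).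
Proof.
  unfold weierstrass_factor.
  rewrite Cmult_conj, Cminus_conj, Cconj_RtoC, cexp_conj, Cplus_conj, !Cconj_div, !Cmult_conj, Cconj_RtoC.
  reflexivity.
Qed.

Lemma zeta_term_conj z O : Cconj (zeta_term z O) = zeta_term (Cconj z) (Cconj O).
Proof. unfold zeta_term. rewrite !Cplus_conj, !Cconj_inv, Cminus_conj, Cconj_div, Cmult_conj. reflexivity. Qed.

Section Conjugation.

Variables w t : R.

Let W := RtoC w.
Let w' : C := (0, t).

Lemma lat_conj m n : Cconj (lat W w' m n) = lat W w' m (- n).
Proof. unfold W, w'. rewrite !lat_RtoC_imag. apply injective_projections; simpl; rewrite ?opp_IZR; ring. Qed.

Let flip (p : Z * Z) := (fst p, (- snd p)%Z).

Lemma lat_prod_conj N f :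
  Cconj (lat_prod W w' N f) = lat_prod W w' N (fun O => Cconj (f (Cconj O))).
Proof.
  unfold lat_prod. fold (nz_idx N). change (fold_right Cmult (RtoC 1) ?l) with (cprod l).
  rewrite cprod_conj, map_map.
  rewrite (Permutation_cprod _ _ (Permutation_map _ (Permutation_nz_idx_invol N flip
    ltac:(intros [m n]; unfold flip; simpl; f_equal; lia)
    ltac:(intros [m n]; unfold in_square, flip; simpl; lia) eq_refl))).
  rewrite map_map. f_equal. apply map_ext. intros [m n]. unfold flip; simpl.
  rewrite lat_conj. reflexivity.
Qed.

Lemma lat_sum_conj N f :
  Cconj (lat_sum W w' N f) = lat_sum W w' N (fun O => Cconj (f (Cconj O))).
Proof.
  unfold lat_sum. fold (nz_idx N). change (fold_right Cplus (RtoC 0) ?l) with (csum l).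
  rewrite csum_conj, map_map.
  rewrite (Permutation_csum _ _ (Permutation_map _ (Permutation_nz_idx_invol N flip
    ltac:(intros [m n]; unfold flip; simpl; f_equal; lia)
    ltac:(intros [m n]; unfold in_square, flip; simpl; lia) eq_refl))).
  rewrite map_map. f_equal. apply map_ext. intros [m n]. unfold flip; simpl.
  rewrite lat_conj. reflexivity.
Qed.

Lemma lat_prod_weierstrass_conj N z :
  Cconj (lat_prod W w' N (weierstrass_factor z)) = lat_prod W w' N (weierstrass_factor (Cconj z)).
Proof.
  rewrite lat_prod_conj. unfold lat_prod. f_equal. apply map_ext. intros p.
  rewrite weierstrass_factor_conj, Cconj_conj. reflexivity.
Qed.

Lemma lat_sum_zeta_conj N z :
  Cconj (lat_sum W w' N (zeta_term z)) = lat_sum W w' N (zeta_term (Cconj z)).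
Proof.
  rewrite lat_sum_conj. unfold lat_sum. f_equal. apply map_ext. intros p.
  rewrite zeta_term_conj, Cconj_conj. reflexivity.
Qed.

Lemma wsigma_real k : Im (wsigma W w' (RtoC k)) = 0.
Proof.
  unfold wsigma. fold (weierstrass_factor (RtoC k)). rewrite im_mult, Im_Clim_real; [simpl; ring|].
  intros N. apply Im_0_of_conj. rewrite lat_prod_weierstrass_conj, Cconj_RtoC. reflexivity.
Qed.

Lemma wzeta_real k : Im (wzeta W w' (RtoC k)) = 0.
Proof.
  unfold wzeta. fold (zeta_term (RtoC k)). rewrite im_plus, Im_Clim_real.
  - unfold Cinv; simpl. unfold Rdiv; ring.
  - intros N. apply Im_0_of_conj. rewrite lat_sum_zeta_conj, Cconj_RtoC. reflexivity.
Qed.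

End Conjugation.

Definition wsigma_trunc (w t : R) (z : C) (N : nat) : C :=
  (z * lat_prod (RtoC w) (0, t) N (weierstrass_factor z))%C.

Definition wzeta_trunc (w t : R) (z : C) (N : nat) : C :=
  (/ z + lat_sum (RtoC w) (0, t) N (zeta_term z))%C.

Lemma is_Clim_seq_wsigma_trunc w t z : 0 < w -> 0 < t ->
  is_Clim_seq (wsigma_trunc w t z) (wsigma (RtoC w) (0, t) z).
Proof.
  intros Hw Ht. apply is_Clim_seq_mult; [apply is_Clim_seq_const|].
  apply is_Clim_seq_lat_prod_weierstrass; auto.
Qed.

Lemma is_Clim_seq_wzeta_trunc w t z : 0 < w -> 0 < t ->
  is_Clim_seq (wzeta_trunc w t z) (wzeta (RtoC w) (0, t) z).
Proof.
  intros Hw Ht. apply is_Clim_seq_plus; [apply is_Clim_seq_const|].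
  apply is_Clim_seq_lat_sum_zeta; auto.
Qed.

Lemma wsigma_trunc_conj w t z N : Cconj (wsigma_trunc w t z N) = wsigma_trunc w t (Cconj z) N.
Proof. unfold wsigma_trunc. rewrite Cmult_conj, lat_prod_weierstrass_conj. reflexivity. Qed.

(** * Quasi-periodicity of the truncations *)

(* The quadratic exponents of the four Weierstrass factors leave [2 w' (Y - X) / O^2], which the
   last summand of [zeta_term w' O] cancels; multiplied over the lattice, this identity is the
   quasi-periodicity of sigma. *)
Lemma weierstrass_factor_shift (w' X Y O : C) :
  O <> RtoC 0 -> (O - (Y - w'))%C <> RtoC 0 -> (O - (X + w'))%C <> RtoC 0 -> (w' - O)%C <> RtoC 0 ->
  (weierstrass_factor (Y + w') O * weierstrass_factor (X - w') O
     * cexp (RtoC (-2) * (Y - X) * zeta_term w' O))%C =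
  (weierstrass_factor (Y - w') O * weierstrass_factor (X + w') O
     * ((O - (Y + w')) * (O - (X - w')) / ((O - (Y - w')) * (O - (X + w'))))
     * cexp (RtoC (-2) * (Y - X) * (/ (w' - O) + / O)))%C.
Proof.
  intros HO H1 H2 H3. unfold weierstrass_factor, zeta_term.
  set (e := fun z => (z / O + z * z / (2 * (O * O)))%C).
  change (cexp ((Y + w') / O + (Y + w') * (Y + w') / (2 * (O * O)))) with (cexp (e (Y + w')%C)).
  change (cexp ((X - w') / O + (X - w') * (X - w') / (2 * (O * O)))) with (cexp (e (X - w')%C)).
  change (cexp ((Y - w') / O + (Y - w') * (Y - w') / (2 * (O * O)))) with (cexp (e (Y - w')%C)).
  change (cexp ((X + w') / O + (X + w') * (X + w') / (2 * (O * O)))) with (cexp (e (X + w')%C)).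
  assert (Hexp : (cexp (e (Y + w')%C) * cexp (e (X - w')%C)
                    * cexp (RtoC (-2) * (Y - X) * (/ (w' - O) + / O + w' / (O * O))))%C =
                 (cexp (e (Y - w')%C) * cexp (e (X + w')%C)
                    * cexp (RtoC (-2) * (Y - X) * (/ (w' - O) + / O)))%C).
  { rewrite <- !cexp_add. f_equal. unfold e. field. auto. }
  transitivity ((1 - (Y + w') / O) * (1 - (X - w') / O)
                * (cexp (e (Y + w')%C) * cexp (e (X - w')%C)
                   * cexp (RtoC (-2) * (Y - X) * (/ (w' - O) + / O + w' / (O * O)))))%C; [ring|].
  rewrite Hexp. field. auto.
Qed.

Definition rsum_sym (f : R -> R) (N : nat) : R :=
  rsum (map (fun j => f (INR j - INR N)) (seq 0 (2 * N + 1))).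

Lemma rsum_sym_S f N : rsum_sym f (S N) = f (- (INR N + 1)) + rsum_sym f N + f (INR N + 1).
Proof.
  unfold rsum_sym. replace (2 * S N + 1)%nat with (S (S (2 * N + 1))) by lia.
  rewrite seq_S, map_app, rsum_app. cbn [seq map]. rewrite <- seq_shift, map_map.
  replace (INR 0 - INR (S N)) with (- (INR N + 1)) by (rewrite S_INR; simpl; ring).
  replace (INR (0 + S (2 * N + 1)) - INR (S N)) with (INR N + 1)
    by (rewrite Nat.add_0_l, !S_INR, plus_INR, mult_INR; simpl; ring).
  rewrite (map_ext (fun j => f (INR (S j) - INR (S N))) (fun j => f (INR j - INR N)))
    by (intros j; rewrite !S_INR; f_equal; ring).
  unfold rsum; simpl. ring.
Qed.

Lemma rsum_sym_odd f : (forall s, f (- s) = - f s) -> forall N, rsum_sym f N = 0.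
Proof.
  intros Hf N. induction N as [|N IH].
  - unfold rsum_sym, rsum; simpl. rewrite Rminus_diag. pose proof (Hf 0) as H0.
    rewrite Ropp_0 in H0. lra.
  - rewrite rsum_sym_S, IH, Hf. ring.
Qed.

(* The values [1 - 2 s] run over the odd numbers from [1 - 2N] to [2N + 1];
   all but the last cancel in pairs. *)
Lemma rsum_sym_odd_shift q : (forall s, q (- s) = - q s) -> forall N,
  rsum_sym (fun s => q (1 - 2 * s)) N = q (2 * INR N + 1).
Proof.
  intros Hq N. induction N as [|N IH].
  - unfold rsum_sym, rsum; simpl. rewrite Rplus_0_r. f_equal. ring.
  - rewrite rsum_sym_S, IH, S_INR.
    replace (1 - 2 * (INR N + 1)) with (- (2 * INR N + 1)) by ring. rewrite Hq.
    replace (1 - 2 * - (INR N + 1)) with (2 * (INR N + 1) + 1) by ring. ring.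
Qed.

Lemma cprod_RtoC_exp {A} (r : A -> R) l :
  cprod (map (fun a => RtoC (exp (r a))) l) = RtoC (exp (rsum (map r l))).
Proof.
  induction l as [|a l IH]; unfold cprod, rsum in *; simpl.
  - rewrite exp_0. reflexivity.
  - rewrite IH, exp_plus, RtoC_mult. reflexivity.
Qed.

Lemma cprod_cexp_imag {A} (b : A -> R) l :
  cprod (map (fun a => cexp (0, b a)) l) = cexp (0, rsum (map b l)).
Proof.
  induction l as [|a l IH]; unfold cprod, rsum in *; simpl.
  - rewrite <- cexp_0. f_equal.
  - rewrite IH, <- cexp_add. f_equal. apply injective_projections; simpl; ring.
Qed.

Lemma IZR_odd_neq_0 n : 2 * IZR n + 1 <> 0 /\ 2 * IZR n - 1 <> 0.
Proof.
  split; intro E.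
  - assert (IZR (2 * n + 1) = 0) as H by (rewrite plus_IZR, mult_IZR; simpl; lra). apply eq_IZR in H. lia.
  - assert (IZR (2 * n - 1) = 0) as H by (rewrite minus_IZR, mult_IZR; simpl; lra). apply eq_IZR in H. lia.
Qed.

Lemma IZR_sub_of_nat j N : IZR (Z.of_nat j - Z.of_nat N) = INR j - INR N.
Proof. rewrite minus_IZR, <- !INR_IZR_INZ. reflexivity. Qed.

(* What [shift_factor] (Section Shift) leaves on the column [Re O = a] of a square of
   half-height [T]: the rational parts telescope to the ends [Im O = -T, T] and the phases
   add up to [2 K T / (a^2 + T^2)]. *)
Definition column_factor (x K T a : R) : C :=
  Cmult (Cmult (Cdiv (a - (x + K), - T) (a - (x + K), T)) (Cdiv (a - x, T) (a - x, - T)))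
        (cexp (0, 2 * K * T / (a ^ 2 + T ^ 2))).

Lemma Im_Cinv_pair p q : Im (/ (p, q))%C = - q / (p * p + q * q).
Proof. simpl. replace (p * (p * 1) + q * (q * 1)) with (p * p + q * q) by ring. reflexivity. Qed.

Lemma rsum_column_phase a t N :
  rsum (map (fun j => Im (Cplus (Cinv (Cminus (0, t) (a, 2 * (INR j - INR N) * t)))
                               (Cinv (a, 2 * (INR j - INR N) * t))))
            (seq 0 (2 * N + 1)))
  = - ((2 * INR N + 1) * t) / (a ^ 2 + ((2 * INR N + 1) * t) ^ 2).
Proof.
  set (q := fun r => - (t * r) / (a * a + (t * r) * (t * r))).
  set (h := fun s => - (2 * s * t) / (a * a + (2 * s * t) * (2 * s * t))).
  rewrite (map_ext _ (fun j => q (1 - 2 * (INR j - INR N)) + h (INR j - INR N))).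
  2: { intros j. rewrite im_plus.
       replace (Cminus (0, t) (a, 2 * (INR j - INR N) * t)) with ((0 - a, t - 2 * (INR j - INR N) * t) : C)
         by (apply injective_projections; simpl; ring).
       rewrite !Im_Cinv_pair. unfold q, h. f_equal; apply f_equal2; ring. }
  rewrite rsum_map_plus. fold (rsum_sym (fun s => q (1 - 2 * s)) N) (rsum_sym h N).
  rewrite rsum_sym_odd_shift, rsum_sym_odd.
  - unfold q. replace (a * a + t * (2 * INR N + 1) * (t * (2 * INR N + 1)))
      with (a ^ 2 + ((2 * INR N + 1) * t) ^ 2) by ring.
    unfold Rdiv. ring.
  - intros s. unfold h. replace (2 * - s * t * (2 * - s * t)) with (2 * s * t * (2 * s * t)) by ring.
    unfold Rdiv. ring.
  - intros s. unfold q. replace (t * - s * (t * - s)) with (t * s * (t * s)) by ring.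
    unfold Rdiv. ring.
Qed.

Lemma cprod_pos_multiple {A} (F G : A -> C) l :
  (forall i, exists rho, 0 < rho /\ F i = (RtoC rho * G i)%C) ->
  exists rho, 0 < rho /\ cprod (map F l) = (RtoC rho * cprod (map G l))%C.
Proof.
  intros H. induction l as [|a l [r1 [H1 E1]]]; unfold cprod in *; simpl.
  - exists 1. split; [lra|ring].
  - destruct (H a) as [r2 [H2 E2]]. exists (r2 * r1). split; [nra|].
    rewrite E1, E2, RtoC_mult. ring.
Qed.

Lemma eq_conj_mul_of_pos (q v : C) (r rho : R) : 0 < r -> 0 < rho -> Cmod v = 1 ->
  (q * RtoC r = Cconj q * (RtoC rho * v))%C -> q = (Cconj q * v)%C.
Proof.
  intros Hr Hrho Hv E. destruct (Ceq_dec q (RtoC 0)) as [->|Hq].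
  - rewrite Cconj_RtoC. ring.
  - assert (r = rho) as <-.
    { apply (f_equal Cmod) in E. rewrite !Cmod_mult, Cmod_conj, Hv, !Cmod_R, !Rabs_pos_eq in E by lra.
      pose proof (Cmod_gt_0 q) as [Hq0 _]. specialize (Hq0 Hq). nra. }
    assert (Hr0 : RtoC r <> RtoC 0) by (intro E0; injection E0; lra).
    apply (f_equal (fun z => z / RtoC r)%C) in E.
    replace (q * RtoC r / RtoC r)%C with q in E by (field; auto).
    rewrite E at 1. field. auto.
Qed.

Lemma Cmod_column_factor x K T a : 0 < T -> Cmod (column_factor x K T a) = 1.
Proof.
  intros HT. unfold column_factor.
  assert (N1 : forall p, (p, T) <> RtoC 0) by (intros p; apply neq_0_of_Im; simpl; lra).
  assert (N2 : forall p, (p, - T) <> RtoC 0) by (intros p; apply neq_0_of_Im; simpl; lra).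
  assert (Hflip : forall p, Cmod (p, - T) = Cmod (p, T)) by (intros; unfold Cmod; simpl; f_equal; ring).
  assert (N3 : forall p, Cmod (p, T) <> 0) by (intros p E; apply (N1 p), Cmod_eq_0, E).
  rewrite !Cmod_mult, !Cmod_div, !Hflip, Cmod_cexp by auto. simpl. rewrite exp_0.
  field. auto.
Qed.

Definition column_product (w t x K : R) (N : nat) : C :=
  cprod (map (fun i => column_factor x K ((2 * INR N + 1) * t) (2 * IZR (Z.of_nat i - Z.of_nat N) * w))
             (seq 0 (2 * N + 1))).

Lemma Cmod_column_product w t x K N : 0 < t -> Cmod (column_product w t x K N) = 1.
Proof.
  intros Ht. apply Cmod_cprod_unit. intros z Hz. apply in_map_iff in Hz as [i [<- _]].
  apply Cmod_column_factor. pose proof (pos_INR N). nra.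
Qed.

Definition sigma_shift_product (w t x K : R) (N : nat) : C :=
  Cmult (Cmult (wsigma_trunc w t (Cplus (Cplus (RtoC x) (RtoC K)) (0, t)) N)
               (Cconj (wsigma_trunc w t (Cplus (RtoC x) (0, t)) N)))
        (cexp (0, - Im (wzeta_trunc w t (0, t) N) * K)).

Section Shift.

Variables w t x K : R.
Hypotheses (Hw : 0 < w) (Ht : 0 < t).

Let W := RtoC w.
Let w' : C := (0, t).
Let X := RtoC x.
Let Y := (RtoC x + RtoC K)%C.
Let shift_coef := (RtoC (-2) * (Y - X))%C.

Let shift_factor (O : C) : C :=
  ((O - (Y + w')) * (O - (X - w')) / ((O - (Y - w')) * (O - (X + w')))
   * cexp (shift_coef * (/ (w' - O) + / O)))%C.

Let lat_pt (p : Z * Z) : C := lat W w' (fst p) (snd p).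

Lemma lat_shift_neq_0 m n : (m, n) <> (0%Z, 0%Z) ->
  lat W w' m n <> RtoC 0 /\ (lat W w' m n - (Y - w'))%C <> RtoC 0 /\
  (lat W w' m n - (X + w'))%C <> RtoC 0 /\ (w' - lat W w' m n)%C <> RtoC 0.
Proof.
  intros Hmn. destruct (IZR_odd_neq_0 n) as [H1 H2].
  split; [apply lat_neq_0; auto|].
  unfold W, w'. rewrite lat_RtoC_imag.
  split; [|split]; apply neq_0_of_Im; unfold X, Y; simpl; intro E.
  - apply H1. apply (Rmult_eq_reg_r t); lra.
  - apply H2. apply (Rmult_eq_reg_r t); lra.
  - apply H2. apply (Rmult_eq_reg_r t); lra.
Qed.

Lemma cprod_nz_idx_shift N :
  cprod (map (fun p => weierstrass_factor (Y + w') (lat_pt p) * weierstrass_factor (X - w') (lat_pt p)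
                       * cexp (shift_coef * zeta_term w' (lat_pt p)))%C (nz_idx N)) =
  (cprod (map (fun p => weierstrass_factor (Y - w') (lat_pt p)) (nz_idx N))
   * cprod (map (fun p => weierstrass_factor (X + w') (lat_pt p)) (nz_idx N))
   * cprod (map (fun p => shift_factor (lat_pt p)) (nz_idx N)))%C.
Proof.
  rewrite <- !cprod_map_mult. f_equal. apply map_ext_in. intros [m n] Hin.
  apply In_nz_idx in Hin as [_ Hmn]. destruct (lat_shift_neq_0 m n Hmn) as [A1 [A2 [A3 A4]]].
  unfold shift_factor, shift_coef, lat_pt. cbn [fst snd]. rewrite Cmult_assoc. apply weierstrass_factor_shift; auto.
Qed.

(* [/ 0 = 0] in Coquelicot, so at the origin only the term [/ w'] of the exponent survives. *)
Lemma shift_factor_origin :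
  shift_factor (lat W w' 0 0) = ((Y + w') * (X - w') / ((Y - w') * (X + w')) * cexp (shift_coef / w'))%C.
Proof.
  assert (HY : (Y - w')%C <> RtoC 0) by (apply neq_0_of_Im; simpl; lra).
  assert (HX : (X + w')%C <> RtoC 0) by (apply neq_0_of_Im; simpl; lra).
  assert (Hw' : w' <> RtoC 0) by (apply neq_0_of_Im; simpl; lra).
  unfold shift_factor. replace (lat W w' 0 0) with (RtoC 0)
    by (unfold W, w'; rewrite lat_RtoC_imag; apply injective_projections; simpl; ring).
  rewrite Cinv_0. f_equal; [field; auto|]. f_equal.
  replace (w' - RtoC 0)%C with w' by ring. field. auto.
Qed.

Lemma wsigma_trunc_shift N :
  (wsigma_trunc w t (Y + w') N * wsigma_trunc w t (X - w') N * cexp (shift_coef * wzeta_trunc w t w' N))%C =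
  (wsigma_trunc w t (Y - w') N * wsigma_trunc w t (X + w') N
     * cprod (map (fun p => shift_factor (lat_pt p)) (sq_idx N)))%C.
Proof.
  unfold wsigma_trunc, wzeta_trunc. fold W w'.
  assert (Hexp : cexp (shift_coef * (/ w' + lat_sum W w' N (zeta_term w')))%C =
     (cexp (shift_coef / w') * cprod (map (fun p => cexp (shift_coef * zeta_term w' (lat_pt p))) (nz_idx N)))%C).
  { rewrite Cmult_plus_distr_l, cexp_add. f_equal.
    unfold lat_sum. fold (nz_idx N). change (fold_right Cplus (RtoC 0) ?l) with (csum l).
    rewrite <- csum_map_scal, cexp_csum, map_map. reflexivity. }
  rewrite Hexp, cprod_sq_idx. unfold lat_pt at 3. cbn [fst snd]. rewrite shift_factor_origin.
  change (lat_prod W w' N ?f) with (cprod (map (fun p => f (lat_pt p)) (nz_idx N))).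
  pose proof (cprod_nz_idx_shift N) as Hpts. rewrite !cprod_map_mult in Hpts.
  assert (HY : (Y - w')%C <> RtoC 0) by (apply neq_0_of_Im; simpl; lra).
  assert (HX : (X + w')%C <> RtoC 0) by (apply neq_0_of_Im; simpl; lra).
  set (P1 := cprod (map (fun p => weierstrass_factor (Y + w') _) _)) in *.
  set (P2 := cprod (map (fun p => weierstrass_factor (X - w') _) _)) in *.
  set (P5 := cprod (map (fun p => cexp (shift_coef * _)) _)) in *.
  transitivity ((Y + w') * (X - w') * cexp (shift_coef / w') * (P1 * P2 * P5))%C; [ring|].
  rewrite Hpts. field. auto.
Qed.

Let col_y (a : R) (N j : nat) : C := (a - (x + K), t * (2 * (INR j - INR N) - 1)).
Let col_x (a : R) (N j : nat) : C := (a - x, t * (2 * (INR j - INR N) - 1)).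
Let col_g (a : R) (N j : nat) : C :=
  Cplus (Cinv (Cminus (0, t) (a, 2 * (INR j - INR N) * t))) (Cinv (a, 2 * (INR j - INR N) * t)).

Lemma col_neq_0 a N j : col_y a N j <> RtoC 0 /\ col_x a N j <> RtoC 0.
Proof.
  assert (Hodd : t * (2 * (INR j - INR N) - 1) <> 0).
  { intros E. destruct (IZR_odd_neq_0 (Z.of_nat j - Z.of_nat N)) as [_ H2].
    rewrite IZR_sub_of_nat in H2. apply H2. apply (Rmult_eq_reg_l t); lra. }
  split; apply neq_0_of_Im, Hodd.
Qed.

Lemma shift_factor_column m N j : let a := 2 * IZR m * w in
  shift_factor (lat W w' m (Z.of_nat j - Z.of_nat N)) =
  Cmult (RtoC (exp (-2 * K * Re (col_g a N j)))
         * (col_y a N j / col_y a N (S j) * (/ col_x a N j / / col_x a N (S j))))%C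
        (cexp (0, -2 * K * Im (col_g a N j))).
Proof.
  intros a. destruct (col_neq_0 a N j) as [Hy Hx]. destruct (col_neq_0 a N (S j)) as [Hy' Hx'].
  unfold shift_factor, W, w'. rewrite lat_RtoC_imag, IZR_sub_of_nat. fold a.
  set (O := (a, 2 * (INR j - INR N) * t) : C).
  replace (Cminus O (Cplus Y (0, t))) with (col_y a N j)
    by (unfold Y, col_y; apply injective_projections; simpl; ring).
  replace (Cminus O (Cminus X (0, t))) with (col_x a N (S j))
    by (unfold X, col_x; rewrite S_INR; apply injective_projections; simpl; ring).
  replace (Cminus O (Cminus Y (0, t))) with (col_y a N (S j))
    by (unfold Y, col_y; rewrite S_INR; apply injective_projections; simpl; ring).
  replace (Cminus O (Cplus X (0, t))) with (col_x a N j)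
    by (unfold X, col_x; apply injective_projections; simpl; ring).
  change (Cplus (Cinv (Cminus (0, t) O)) (Cinv O)) with (col_g a N j).
  replace (shift_coef * col_g a N j)%C with ((-2 * K * Re (col_g a N j), -2 * K * Im (col_g a N j)) : C)
    by (unfold shift_coef, X, Y; destruct (col_g a N j); apply injective_projections; simpl; ring).
  rewrite cexp_polar. field. auto.
Qed.

Lemma cprod_column_shift_factor N m : exists rho, 0 < rho /\
  cprod (map (fun j => shift_factor (lat W w' m (Z.of_nat j - Z.of_nat N))) (seq 0 (2 * N + 1))) =
  (RtoC rho * column_factor x K ((2 * INR N + 1) * t) (2 * IZR m * w))%C.
Proof.
  set (a := 2 * IZR m * w). set (T := (2 * INR N + 1) * t).
  assert (HT : 0 < T) by (unfold T; pose proof (pos_INR N); nra).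
  rewrite (map_ext _ _ (shift_factor_column m N)), !cprod_map_mult, cprod_RtoC_exp.
  rewrite cprod_cexp_imag, (cprod_telescope (col_y a N)) by (intros; apply col_neq_0).
  rewrite (cprod_telescope (fun j => / col_x a N j)%C).
  2: { intros j _ E. apply C1_nz. rewrite <- (Cinv_r (col_x a N j)), E by apply col_neq_0. ring. }
  eexists. split; [apply exp_pos|]. unfold column_factor. fold T.
  rewrite (Cmult_assoc (RtoC (exp _)) (Cmult (Cdiv _ _) (Cdiv _ _)) (cexp _)).
  f_equal; [f_equal; f_equal|].
  - f_equal; unfold col_y, T; apply injective_projections; cbn [fst snd];
      rewrite ?plus_INR, ?mult_INR; simpl INR; ring.
  - replace (col_x a N 0) with ((a - x, - T) : C)
      by (unfold col_x, T; apply injective_projections; simpl; ring).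
    replace (col_x a N (2 * N + 1)) with ((a - x, T) : C)
      by (unfold col_x, T; apply injective_projections; cbn [fst snd];
          rewrite ?plus_INR, ?mult_INR; simpl INR; ring).
    field. split; apply neq_0_of_Im; simpl; lra.
  - f_equal. f_equal. rewrite rsum_map_scal. unfold col_g. rewrite rsum_column_phase. fold a T.
    assert (0 < a ^ 2 + T ^ 2) by (pose proof (pow2_ge_0 a); pose proof (pow_lt T 2 HT); lra).
    field. lra.
Qed.


Lemma sigma_shift_product_eq_conj_mul N :
  sigma_shift_product w t x K N = (Cconj (sigma_shift_product w t x K N) * column_product w t x K N)%C.
Proof.
  destruct (cprod_pos_multiple
     (fun i => cprod (map (fun j => shift_factor (lat W w' (Z.of_nat i - Z.of_nat N) (Z.of_nat j - Z.of_nat N)))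
                          (seq 0 (2 * N + 1))))
     (fun i => column_factor x K ((2 * INR N + 1) * t) (2 * IZR (Z.of_nat i - Z.of_nat N) * w))
     (seq 0 (2 * N + 1)) (fun i => cprod_column_shift_factor N _)) as [rho [Hrho Erho]].
  pose proof (wsigma_trunc_shift N) as Hshift. unfold lat_pt in Hshift.
  rewrite cprod_sq_idx_rows in Hshift. cbn [fst snd] in Hshift. rewrite Erho in Hshift.
  fold (column_product w t x K N) in Hshift.
  set (Z := wzeta_trunc w t w' N) in *.
  assert (Hkk : cexp (shift_coef * Z)%C = Cmult (RtoC (exp (-2 * K * Re Z))) (cexp (0, -2 * K * Im Z))).
  { rewrite <- cexp_polar. f_equal. unfold shift_coef, Y, X. destruct Z. apply injective_projections; simpl; ring. }
  rewrite Hkk in Hshift.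
  assert (Ey : Cconj (Y + w')%C = (Y - w')%C) by (unfold Y, w'; apply injective_projections; simpl; ring).
  assert (Ex : Cconj (X + w')%C = (X - w')%C) by (unfold X, w'; apply injective_projections; simpl; ring).
  assert (Ex' : Cconj (X - w')%C = (X + w')%C) by (unfold X, w'; apply injective_projections; simpl; ring).
  assert (Hq : sigma_shift_product w t x K N =
     Cmult (wsigma_trunc w t (Y + w') N * wsigma_trunc w t (X - w') N)%C (cexp (0, - Im Z * K))).
  { unfold sigma_shift_product. fold w' Y X Z. rewrite wsigma_trunc_conj, Ex. reflexivity. }
  assert (Hqc : Cconj (sigma_shift_product w t x K N) =
     Cmult (wsigma_trunc w t (Y - w') N * wsigma_trunc w t (X + w') N)%C (cexp (0, Im Z * K))).
  { rewrite Hq, !Cmult_conj, !wsigma_trunc_conj, Ey, Ex', cexp_conj. do 2 f_equal.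
    apply injective_projections; simpl; ring. }
  apply (eq_conj_mul_of_pos _ _ (exp (-2 * K * Re Z)) rho);
    [apply exp_pos|auto|apply Cmod_column_product; auto|].
  rewrite Hqc, Hq.
  replace (cexp (0, - Im Z * K)) with (Cmult (cexp (0, -2 * K * Im Z)) (cexp (0, Im Z * K)))
    by (rewrite <- cexp_add; f_equal; apply injective_projections; simpl; ring).
  transitivity (Cmult (Cmult (wsigma_trunc w t (Y + w') N * wsigma_trunc w t (X - w') N)%C
                             (Cmult (RtoC (exp (-2 * K * Re Z))) (cexp (0, -2 * K * Im Z))))
                      (cexp (0, Im Z * K))); [ring|].
  rewrite Hshift. ring.
Qed.

End Shift.

(** * The column factors tend to 1 *)

Lemma RtoC_mult_Ci r : (RtoC r * Ci)%C = (0, r).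
Proof. apply injective_projections; simpl; ring. Qed.

Lemma cexp_imag_taylor1_le b : Rabs b <= 1 -> Cmod (cexp (0, b) - 1 - (0, b))%C <= b ^ 2.
Proof.
  intros Hb. eapply Rle_trans; [apply Cmod_le_abs_re_im|].
  replace (Re (cexp (0, b) - 1 - (0, b))%C) with (cos b - 1) by (unfold cexp; simpl; rewrite exp_0; ring).
  replace (Im (cexp (0, b) - 1 - (0, b))%C) with (sin b - b) by (unfold cexp; simpl; rewrite exp_0; ring).
  pose proof (cos_taylor_le b ltac:(lra)) as Cb. pose proof (sin_taylor_le b Hb) as Sb.
  pose proof (Rabs_pos b). rewrite <- (pow2_abs b).
  replace (b ^ 2) with (Rabs b ^ 2) in Cb by apply pow2_abs.
  replace (b ^ 4) with ((Rabs b ^ 2) ^ 2) in Cb by (rewrite pow2_abs; ring).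
  assert (0 <= Rabs b ^ 2 <= 1) by (simpl; split; nra).
  assert ((Rabs b ^ 2) ^ 2 <= Rabs b ^ 2) by (simpl; nra).
  assert (Rabs b ^ 3 <= Rabs b ^ 2) by (replace (Rabs b ^ 3) with (Rabs b ^ 2 * Rabs b) by ring; nra).
  assert (Rabs (cos b - 1) <= Rabs b ^ 2 / 2) by (split_Rabs; lra).
  lra.
Qed.

Lemma cexp_imag_sub1_le b : Rabs b <= 1 -> Cmod (cexp (0, b) - 1)%C <= 2 * Rabs b.
Proof.
  intros Hb. replace (cexp (0, b) - 1)%C with ((cexp (0, b) - 1 - (0, b)) + (0, b))%C by ring.
  eapply Rle_trans; [apply Cmod_triangle|].
  pose proof (cexp_imag_taylor1_le b Hb).
  replace (Cmod (0, b)) with (Rabs b) by (unfold Cmod; simpl; rewrite <- sqrt_Rsqr_abs; f_equal; unfold Rsqr; ring).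
  assert (b ^ 2 <= Rabs b) by (rewrite <- (pow2_abs b); simpl; pose proof (Rabs_pos b); nra).
  lra.
Qed.

Definition column_factor_const (x K : R) : R :=
  20 * K ^ 2 + 4 * Rabs K * Rabs (2 * x + K) + 8 * Rabs K * Rabs x * Rabs (x + K).

Lemma column_factor_const_nonneg x K : 0 <= column_factor_const x K.
Proof.
  unfold column_factor_const. pose proof (pow2_ge_0 K). pose proof (Rabs_pos K).
  pose proof (Rabs_pos x). pose proof (Rabs_pos (2 * x + K)). pose proof (Rabs_pos (x + K)).
  assert (0 <= Rabs K * Rabs (2 * x + K)) by (apply Rmult_le_pos; lra).
  assert (0 <= Rabs K * Rabs x * Rabs (x + K)) by (repeat apply Rmult_le_pos; lra).
  lra.
Qed.

Section ColumnFactorBound.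

Variables x K T a : R.
Hypotheses (HT : 1 <= T) (HKT : 2 * Rabs K <= T) (HxT : x ^ 2 + K ^ 2 <= T ^ 2).

Let D := a ^ 2 + T ^ 2.
Let P := (a - (x + K)) * (a - x) + T ^ 2.
Let b := 2 * K * T / D.

Lemma column_D_bounds : T ^ 2 <= D /\ 2 * T * Rabs a <= D /\ D <= 4 * P.
Proof.
  unfold D, P. split; [pose proof (pow2_ge_0 a); lra|split].
  - rewrite <- (pow2_abs a). pose proof (pow2_ge_0 (Rabs a - T)). simpl in *. nra.
  - pose proof (pow2_ge_0 (a - 4/3 * x - 2/3 * K)). pose proof (pow2_ge_0 (x - 2/5 * K)).
    pose proof (pow2_ge_0 K). simpl in *. lra.
Qed.

Lemma column_abs_b_D : Rabs b * D = 2 * Rabs K * T.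
Proof.
  destruct column_D_bounds as [HD _]. assert (HD0 : 0 < D) by (simpl in *; nra).
  unfold b. rewrite <- (Rabs_pos_eq D) at 2 by lra. rewrite <- Rabs_mult.
  replace (2 * K * T / D * D) with (2 * K * T) by (field; lra).
  rewrite !Rabs_mult, (Rabs_pos_eq T), (Rabs_pos_eq 2) by lra. reflexivity.
Qed.

Lemma column_b_bounds : Rabs b * T <= 2 * Rabs K /\ Rabs b <= 1.
Proof.
  destruct column_D_bounds as [HD _]. pose proof column_abs_b_D as Hb.
  assert (Rabs b * T * T <= 2 * Rabs K * T)
    by (rewrite <- Hb; replace (T ^ 2) with (T * T) in HD by ring;
        rewrite Rmult_assoc; apply Rmult_le_compat_l; [apply Rabs_pos|lra]).
  assert (Rabs b * T <= 2 * Rabs K) by (apply (Rmult_le_reg_r T); lra).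
  split; [auto|]. apply (Rmult_le_reg_r T); lra.
Qed.

Lemma column_factor_sub1_eq :
  (column_factor x K T a - 1)%C =
  ((RtoC P * (cexp (0, b) - 1 - RtoC b * Ci) + RtoC (b * P - 2 * K * T) * Ci
    - RtoC (K * T) * Ci * (cexp (0, b) - 1)) / (RtoC P + RtoC (K * T) * Ci))%C.
Proof.
  destruct column_D_bounds as [HD [_ HP]].
  assert (HP0 : 0 < P) by (simpl in *; nra).
  assert (Hden : (RtoC P + RtoC (K * T) * Ci)%C <> RtoC 0)
    by (intro E; apply (f_equal Re) in E; simpl in E; lra).
  assert (Hu : forall p, (p, T) <> RtoC 0) by (intros p; apply neq_0_of_Im; simpl; lra).
  assert (Hv : forall p, (p, - T) <> RtoC 0) by (intros p; apply neq_0_of_Im; simpl; lra).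
  (* (u - iT)(v + iT) = P - iKT and (u + iT)(v - iT) = P + iKT, with u = a - (x + K), v = a - x *)
  assert (Hratio : Cmult (Cdiv (a - (x + K), - T) (a - (x + K), T)) (Cdiv (a - x, T) (a - x, - T))
                   = ((RtoC P - RtoC (K * T) * Ci) / (RtoC P + RtoC (K * T) * Ci))%C).
  { replace (RtoC P - RtoC (K * T) * Ci)%C with (Cmult (a - (x + K), - T) (a - x, T))
      by (unfold P; apply injective_projections; simpl; ring).
    replace (RtoC P + RtoC (K * T) * Ci)%C with (Cmult (a - (x + K), T) (a - x, - T))
      by (unfold P; apply injective_projections; simpl; ring).
    field. split; auto. }
  unfold column_factor. rewrite Hratio. fold D b.
  rewrite RtoC_mult in Hden. rewrite RtoC_minus, !RtoC_mult. field. auto.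
Qed.

Lemma column_numerator_le :
  (P * b ^ 2 + Rabs (b * P - 2 * K * T) + Rabs (K * T) * (2 * Rabs b)) * T ^ 2
  <= column_factor_const x K * P.
Proof.
  destruct column_D_bounds as [HD [Ha HP]]. destruct column_b_bounds as [HbT _].
  assert (HD0 : 0 < D) by (simpl in *; nra). pose proof column_abs_b_D as HbD.
  pose proof (Rabs_pos b). pose proof (Rabs_pos K). pose proof (Rabs_pos a).
  assert (HT2 : T <= T ^ 2) by (simpl; nra).
  assert (Hba : Rabs b * Rabs a <= Rabs K) by (apply (Rmult_le_reg_r (2 * T)); nra).
  assert (Hb2 : P * b ^ 2 * T ^ 2 <= 4 * K ^ 2 * P).
  { rewrite <- (pow2_abs b), <- (pow2_abs K).
    replace (P * Rabs b ^ 2 * T ^ 2) with (P * (Rabs b * T) ^ 2) by ring.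
    replace (4 * Rabs K ^ 2 * P) with (P * (2 * Rabs K) ^ 2) by ring.
    apply Rmult_le_compat_l; [lra|]. apply pow_incr. split; [apply Rmult_le_pos; lra|auto]. }
  assert (HKb : Rabs (K * T) * (2 * Rabs b) * T ^ 2 <= 16 * K ^ 2 * P).
  { rewrite Rabs_mult, (Rabs_pos_eq T) by lra.
    replace (Rabs K * T * (2 * Rabs b) * T ^ 2) with (2 * Rabs K * T ^ 2 * (Rabs b * T)) by ring.
    rewrite <- (pow2_abs K).
    apply Rle_trans with (2 * Rabs K * T ^ 2 * (2 * Rabs K)); [apply Rmult_le_compat_l; nra|nra]. }
  assert (HPD : Rabs (b * P - 2 * K * T) <= Rabs b * Rabs a * Rabs (2 * x + K) + Rabs b * Rabs x * Rabs (x + K)).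
  { assert (Hb : b * D = 2 * K * T) by (unfold b; field; lra).
    assert (HPD0 : P - D = - a * (2 * x + K) + x * (x + K)) by (unfold P, D; ring).
    replace (b * P - 2 * K * T) with (b * (P - D)) by (rewrite Rmult_minus_distr_l, Hb; ring).
    rewrite HPD0, Rmult_plus_distr_l.
    eapply Rle_trans; [apply Rabs_triang|]. rewrite !Rabs_mult, Rabs_Ropp. lra. }
  assert (Hax : Rabs b * Rabs a * Rabs (2 * x + K) * T ^ 2 <= 4 * Rabs K * Rabs (2 * x + K) * P).
  { pose proof (Rabs_pos (2 * x + K)).
    apply Rle_trans with (Rabs K * Rabs (2 * x + K) * T ^ 2).
    - apply Rmult_le_compat_r; [apply pow2_ge_0|apply Rmult_le_compat_r; auto].
    - replace (4 * Rabs K * Rabs (2 * x + K) * P) with (Rabs K * Rabs (2 * x + K) * (4 * P)) by ring.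
      apply Rmult_le_compat_l; [apply Rmult_le_pos; auto|lra]. }
  assert (Hxx : Rabs b * Rabs x * Rabs (x + K) * T ^ 2 <= 8 * Rabs K * Rabs x * Rabs (x + K) * P).
  { assert (0 <= Rabs x * Rabs (x + K)) by (apply Rmult_le_pos; apply Rabs_pos).
    replace (Rabs b * Rabs x * Rabs (x + K) * T ^ 2) with (Rabs b * T * T * (Rabs x * Rabs (x + K))) by ring.
    replace (8 * Rabs K * Rabs x * Rabs (x + K) * P) with (8 * Rabs K * P * (Rabs x * Rabs (x + K))) by ring.
    apply Rmult_le_compat_r; [auto|]. nra. }
  unfold column_factor_const. nra.
Qed.

Lemma Cmod_column_factor_sub1_le : Cmod (column_factor x K T a - 1)%C <= column_factor_const x K / T ^ 2.
Proof.
  destruct column_D_bounds as [HD [_ HP]]. destruct column_b_bounds as [_ Hb1].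
  assert (HP0 : 0 < P) by (simpl in *; nra).
  assert (Hden : P <= Cmod (RtoC P + RtoC (K * T) * Ci)%C).
  { pose proof (re_le_Cmod (RtoC P + RtoC (K * T) * Ci)%C) as H. simpl in H.
    rewrite Rabs_pos_eq in H by lra. lra. }
  assert (Hnum : Cmod (RtoC P * (cexp (0, b) - 1 - RtoC b * Ci) + RtoC (b * P - 2 * K * T) * Ci
                        - RtoC (K * T) * Ci * (cexp (0, b) - 1))%C
                 <= P * b ^ 2 + Rabs (b * P - 2 * K * T) + Rabs (K * T) * (2 * Rabs b)).
  { unfold Cminus at 2. eapply Rle_trans; [apply Cmod_triangle|].
    rewrite Cmod_opp. eapply Rle_trans; [apply Rplus_le_compat_r, Cmod_triangle|].
    rewrite !Cmod_mult, !Cmod_R, Cmod_Ci, (Rabs_pos_eq P) by lra. rewrite RtoC_mult_Ci.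
    pose proof (cexp_imag_taylor1_le b Hb1). pose proof (cexp_imag_sub1_le b Hb1).
    pose proof (Rabs_pos (K * T)).
    rewrite !Rmult_1_r. apply Rplus_le_compat; [apply Rplus_le_compat; [apply Rmult_le_compat_l; [lra|exact H]|lra]|].
    apply Rmult_le_compat_l; lra. }
  pose proof column_numerator_le. pose proof (pow_lt T 2 ltac:(lra)).
  rewrite column_factor_sub1_eq, Cmod_div by (intro E; rewrite E, Cmod_0 in Hden; lra).
  apply (Rmult_le_reg_r (Cmod (RtoC P + RtoC (K * T) * Ci)%C * T ^ 2)); [apply Rmult_lt_0_compat; lra|].
  replace (_ / _ * _) with (Cmod (RtoC P * (cexp (0, b) - 1 - RtoC b * Ci) + RtoC (b * P - 2 * K * T) * Ci
                                  - RtoC (K * T) * Ci * (cexp (0, b) - 1))%C * T ^ 2) by (field; lra).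
  replace (column_factor_const x K / T ^ 2 * _) with (column_factor_const x K * Cmod (RtoC P + RtoC (K * T) * Ci)%C)
    by (field; lra).
  pose proof (column_factor_const_nonneg x K).
  apply Rle_trans with (column_factor_const x K * P); [|apply Rmult_le_compat_l; lra].
  eapply Rle_trans; [|eauto]. apply Rmult_le_compat_r; lra.
Qed.

End ColumnFactorBound.

Lemma is_lim_seq_const_div_S (M : R) : is_lim_seq (fun N => M / (INR N + 1)) 0.
Proof.
  pose proof (is_lim_seq_inv _ _ is_lim_seq_INR ltac:(discriminate)) as H. simpl in H.
  apply (is_lim_seq_incr_1 (fun n => / INR n) 0) in H.
  apply (is_lim_seq_scal_l _ M) in H.
  replace (Rbar_mult M 0) with (Finite 0) in H by (simpl; f_equal; ring).
  eapply is_lim_seq_ext; [|exact H]. intros n. cbv beta. rewrite S_INR. reflexivity.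
Qed.

Lemma is_lim_seq_column_product w t x K : 0 < t ->
  is_lim_seq (fun N => Cmod (column_product w t x K N - 1)%C) 0.
Proof.
  intros Ht. pose proof (column_factor_const_nonneg x K) as HC. set (C0 := column_factor_const x K) in *.
  set (Rb := 1 + 2 * Rabs K + x ^ 2 + K ^ 2 + C0 / t).
  assert (HCt : 0 <= C0 / t) by (apply Rdiv_le_0_compat; lra).
  destruct (exists_nat_ge (Rb / t)) as [N1 HN1].
  apply (is_lim_seq_le_le_loc (fun _ => 0) _ (fun N => 3 * (C0 / t ^ 2) / (INR N + 1)));
    [|apply is_lim_seq_const|apply is_lim_seq_const_div_S].
  exists N1. intros N HN. split; [apply Cmod_ge_0|].
  set (T := (2 * INR N + 1) * t). pose proof (pos_INR N).
  assert (HTb : Rb <= T).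
  { apply le_INR in HN. apply (Rmult_le_compat_r t) in HN1; [|lra].
    unfold Rdiv in HN1. rewrite Rmult_assoc, Rinv_l, Rmult_1_r in HN1 by lra. unfold T. nra. }
  pose proof (Rabs_pos K). pose proof (pow2_ge_0 x). pose proof (pow2_ge_0 K).
  assert (HT1 : 1 <= T) by (unfold Rb in HTb; lra).
  assert (HT2 : 2 * Rabs K <= T) by (unfold Rb in HTb; lra).
  assert (HT3 : x ^ 2 + K ^ 2 <= T ^ 2) by (unfold Rb in HTb; simpl; nra).
  assert (HT4 : C0 / t <= T) by (unfold Rb in HTb; lra).
  unfold column_product. fold T.
  eapply Rle_trans; [apply Cmod_cprod_sub1_le|]. rewrite map_map.
  set (sg := rsum _).
  assert (Hsg : sg <= C0 / ((2 * INR N + 1) * t ^ 2)).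
  { eapply Rle_trans; [apply (rsum_map_le _ _ (C0 / T ^ 2))|].
    - intros i _. apply Cmod_column_factor_sub1_le; auto.
    - rewrite length_seq, plus_INR, mult_INR. right. unfold T. simpl. field. lra. }
  assert (Hsg0 : 0 <= sg) by (apply rsum_map_nonneg; intros; apply Cmod_ge_0).
  assert (Hsg1 : sg <= 1).
  { eapply Rle_trans; [apply Hsg|].
    replace (C0 / ((2 * INR N + 1) * t ^ 2)) with ((C0 / t) / T) by (unfold T; field; lra).
    apply (Rmult_le_reg_r T); [lra|]. unfold Rdiv at 1. rewrite Rmult_assoc, Rinv_l by lra. lra. }
  pose proof (exp_sub1_le sg ltac:(rewrite Rabs_pos_eq; lra)) as E.
  rewrite Rabs_pos_eq in E by (pose proof (exp_ineq1_le sg); lra). rewrite (Rabs_pos_eq sg) in E by lra.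
  eapply Rle_trans; [apply E|].
  assert (C0 / ((2 * INR N + 1) * t ^ 2) <= (C0 / t ^ 2) / (INR N + 1)).
  { unfold Rdiv. rewrite Rinv_mult, (Rmult_comm (/ (2 * INR N + 1))), <- Rmult_assoc.
    apply Rmult_le_compat_l; [apply Rmult_le_pos; [lra|left; apply Rinv_0_lt_compat, pow_lt; lra]|].
    apply Rinv_le_contravar; lra. }
  unfold Rdiv in *. lra.
Qed.

Lemma Im_Clim_eq_0_of_eq_conj_mul (q v : nat -> C) L :
  is_Clim_seq q L -> is_lim_seq (fun N => Cmod (v N - 1)%C) 0 ->
  (forall N, q N = (Cconj (q N) * v N)%C) -> Im L = 0.
Proof.
  intros [HRe HIm] Hv Hq.
  set (B := fun N => Rabs (Re (q N)) + Rabs (Im (q N))).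
  assert (HB : is_lim_seq B (Rabs (Re L) + Rabs (Im L))).
  { apply is_lim_seq_plus'; apply (is_lim_seq_abs _ (Finite _)); auto. }
  assert (Hbound : forall N, Rabs (Im (q N)) <= B N * Cmod (v N - 1)%C).
  { intros N. pose proof (Hq N) as E.
    assert (Hd : Cmod (q N - Cconj (q N))%C = Cmod (Cconj (q N)) * Cmod (v N - 1)%C).
    { rewrite <- Cmod_mult. f_equal. rewrite E at 1. ring. }
    rewrite im_alt', Cmod_conj in Hd. rewrite !Cmod_mult, Cmod_R, Cmod_Ci in Hd.
    pose proof (Cmod_le_abs_re_im (q N)). pose proof (Cmod_ge_0 (v N - 1)%C).
    assert (Cmod (q N) * Cmod (v N - 1)%C <= B N * Cmod (v N - 1)%C) by (apply Rmult_le_compat_r; auto).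
    rewrite Cmod_R in Hd. rewrite Rabs_pos_eq in Hd by lra. pose proof (Rabs_pos (Im (q N))). nra. }
  assert (H0 : is_lim_seq (fun N => Im (q N)) 0).
  { apply (is_lim_seq_le_le (fun N => - (B N * Cmod (v N - 1)%C)) _ (fun N => B N * Cmod (v N - 1)%C)).
    - intros N. pose proof (Hbound N). split_Rabs; lra.
    - replace (Finite 0) with (Rbar_opp (Rbar_mult (Rabs (Re L) + Rabs (Im L)) 0))
        by (simpl; f_equal; ring).
      apply -> is_lim_seq_opp. apply is_lim_seq_mult'; auto.
    - replace (Finite 0) with (Finite ((Rabs (Re L) + Rabs (Im L)) * 0)) by (f_equal; ring).
      apply is_lim_seq_mult'; auto. }
  pose proof (is_lim_seq_unique _ _ HIm) as E1. rewrite (is_lim_seq_unique _ _ H0) in E1.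
  injection E1. auto.
Qed.

Lemma wsigma_shift_real w t x K : 0 < w -> 0 < t ->
  Im (Cmult (Cmult (wsigma (RtoC w) (0, t) (Cplus (Cplus (RtoC x) (RtoC K)) (0, t)))
                   (Cconj (wsigma (RtoC w) (0, t) (Cplus (RtoC x) (0, t)))))
            (cexp (0, - Im (wzeta (RtoC w) (0, t) (0, t)) * K))) = 0.
Proof.
  intros Hw Ht.
  apply (Im_Clim_eq_0_of_eq_conj_mul (sigma_shift_product w t x K) (column_product w t x K)).
  - apply is_Clim_seq_mult; [apply is_Clim_seq_mult|apply is_Clim_seq_cexp].
    + apply is_Clim_seq_wsigma_trunc; auto.
    + apply is_Clim_seq_conj, is_Clim_seq_wsigma_trunc; auto.
    + destruct (is_Clim_seq_wzeta_trunc w t (0, t) Hw Ht) as [_ HZ].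
      split; [apply is_lim_seq_const|].
      apply (is_lim_seq_mult' (fun n => - Im (wzeta_trunc w t (0, t) n)) (fun _ => K));
        [apply (proj1 (is_lim_seq_opp _ _) HZ)|apply is_lim_seq_const].
  - apply is_lim_seq_column_product; auto.
  - intros N. apply sigma_shift_product_eq_conj_mul; auto.
Qed.

(* [A / (B S) = A conj(B) / (|B|^2 S)] with [|B|^2 S] real, and [Z x] is real. *)
Lemma Im_psi_eq_0 (A B S Z E : C) (x K : R) :
  B <> RtoC 0 -> S <> RtoC 0 -> Im S = 0 -> Im Z = 0 ->
  Im (Cmult (A * Cconj B)%C (cexp (0, - Im E * K))) = 0 ->
  Im (A / (B * S) * cexp (- (Z * x + E * K)))%C = 0.
Proof.
  intros HB HS HSi HZi HQ.
  assert (ES : S = RtoC (Re S)) by (destruct S; simpl in *; subst; reflexivity).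
  assert (EZ : Z = RtoC (Re Z)) by (destruct Z; simpl in *; subst; reflexivity).
  set (s := Re S) in *. set (z := Re Z) in *. rewrite ES in HS |- *. rewrite EZ.
  assert (Hs : s <> 0) by (intro E0; apply HS; rewrite E0; reflexivity).
  replace (Copp (Cplus (Cmult (RtoC z) (RtoC x)) (Cmult E (RtoC K))))
    with ((- (z * x) - Re E * K, - Im E * K) : C)
    by (destruct E; apply injective_projections; simpl; ring).
  rewrite cexp_polar.
  assert (HB2 : Cmod B ^ 2 * s <> 0)
    by (apply Rmult_integral_contrapositive; split; auto; apply pow_nonzero; intro E0; apply HB, Cmod_eq_0, E0).
  assert (HBc : Cconj B <> RtoC 0) by (intro E0; apply HB; rewrite <- (Cconj_conj B), E0; apply Cconj_RtoC).
  replace (A / (B * RtoC s))%C with (RtoC (/ (Cmod B ^ 2 * s)) * (A * Cconj B))%C.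
  2: { rewrite RtoC_inv, RtoC_mult, Cmod2_conj by auto.
       field. repeat split; auto. }
  replace (Cmult (RtoC (/ (Cmod B ^ 2 * s)) * (A * Cconj B))%C
                 (Cmult (RtoC (exp (- (z * x) - Re E * K))) (cexp (0, - Im E * K))))
    with (Cmult (RtoC (/ (Cmod B ^ 2 * s) * exp (- (z * x) - Re E * K)))
                (Cmult (A * Cconj B)%C (cexp (0, - Im E * K))))
    by (rewrite RtoC_mult; ring).
  rewrite im_scal_l, HQ. ring.
Qed.

Theorem proposition2p1 (g2 g3 w t : R) :
  g2 ^ 3 - 27 * g3 ^ 2 > 0 ->
  0 < w -> 0 < t ->
  wg2 (RtoC w) (0, t) = RtoC g2 ->
  wg3 (RtoC w) (0, t) = RtoC g3 ->
  forall x k l : R,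
    (wsigma (RtoC w) (0, t) (Cplus (RtoC x) (0, t)) <> RtoC 0 ->
     wsigma (RtoC w) (0, t) (RtoC k) <> RtoC 0 ->
     Im (Psi1 (RtoC w) (0, t) (RtoC x) (RtoC k)) = 0) /\
    (wsigma (RtoC w) (0, t) (Cplus (RtoC x) (0, t)) <> RtoC 0 ->
     wsigma (RtoC w) (0, t) (RtoC k) <> RtoC 0 ->
     wsigma (RtoC w) (0, t) (RtoC l) <> RtoC 0 ->
     wsigma (RtoC w) (0, t) (RtoC (k + l)) <> RtoC 0 ->
     Im (Psi2 (RtoC w) (0, t) (RtoC x) (RtoC k) (RtoC l)) = 0).
Proof.
  intros _ Hw Ht _ _ x k l. split.
  - intros HB HS. apply Im_psi_eq_0; auto.
    + apply wsigma_real.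
    + apply wzeta_real.
    + apply wsigma_shift_real; auto.
  - intros HB _ _ HS. unfold Psi2.
    replace (Cplus (Cplus (Cplus (RtoC x) (RtoC k)) (RtoC l)) (0, t))
      with (Cplus (Cplus (RtoC x) (RtoC (k + l))) (0, t)) by (apply injective_projections; simpl; ring).
    replace (Cplus (RtoC k) (RtoC l)) with (RtoC (k + l)) by (apply injective_projections; simpl; ring).
    apply Im_psi_eq_0; auto.
    + apply wsigma_real.
    + rewrite im_plus, !wzeta_real. ring.
    + apply wsigma_shift_real; auto.
Qed.
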